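(* Let $M$ be the complete hyperbolic thrice-punctured sphere (unique up to isometry), with cusps $e_1,e_2,e_3$. Then the infimum $h''_{M,e_1}$ of the heights with respect to $e_1$ of the closed geodesics of $M$ is not attained by any closed geodesic, but it is attained by a simple geodesic line starting from (converging at one end to) $e_2$ and converging to $e_3$, i.e. this line has height $h''_{M,e_1}$.
   Context: For a cusp $e$ of a complete finite-area hyperbolic surface $M$, $\beta_e$ is its Busemann function normalized to be $0$ on the boundary of the maximal embedded horoball neighborhood of $e$ (precisely: $\beta_e=\beta_r-\eta_0$ where $\beta_r(x)=\lim_t(t-d_M(x,r(t)))$ for a minimizing ray $r$ going into $e$, and $\eta_0$ is the threshold above which the level sets of $\beta_r$ in the cusp lift to embedded horosphere quotients), increasing to $+\infty$ into $e$. The height with respect to $e$ of a closed subset $P$ disjoint from a neighborhood of $e$ is $\max_{x\in P}\beta_e(x)$. *)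

From Stdlib Require Import Reals ZArith.
From Coquelicot Require Import Coquelicot.
Open Scope R_scope.

(* Model: M = H^2 / Gamma(2), the complete hyperbolic thrice-punctured
   sphere, in the upper half-plane model.  Cusps: e1 = class of oo, e2 = class of 0,
   e3 = class of 1. *)

Definition pt := (R * R)%type.
Definition inH (p : pt) : Prop := 0 < snd p.

Definition arcosh (u : R) : R := ln (u + sqrt (u * u - 1)).
Definition dH (p q : pt) : R :=
  arcosh (1 + ((fst p - fst q) ^ 2 + (snd p - snd q) ^ 2)
              / (2 * snd p * snd q)).

(* integer 2x2 matrices (a, b, c, d) and their Moebius action
   z |-> (a z + b) / (c z + d) *)
Definition mat := (Z * Z * Z * Z)%type.
Definition ma (g : mat) : R := let '(a, _, _, _) := g in IZR a.
Definition mb (g : mat) : R := let '(_, b, _, _) := g in IZR b.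
Definition mc (g : mat) : R := let '(_, _, c, _) := g in IZR c.
Definition md (g : mat) : R := let '(_, _, _, d) := g in IZR d.

Definition act (g : mat) (p : pt) : pt :=
  let x := fst p in let y := snd p in
  let den := (mc g * x + md g) ^ 2 + (mc g * y) ^ 2 in
  (((ma g * x + mb g) * (mc g * x + md g) + ma g * mc g * y ^ 2) / den,
   y / den).

Definition Gamma2 (g : mat) : Prop :=
  let '(a, b, c, d) := g in
  (a * d - b * c = 1)%Z /\ Z.Odd a /\ Z.Even b /\ Z.Even c /\ Z.Odd d.

Definition dM (p q : pt) : R :=
  real (Glb_Rbar (fun r => exists g, Gamma2 g /\ r = dH p (act g q))).

(* a minimizing ray going into the cusp e1 (lifted: the vertical ray) *)
Definition ray (t : R) : pt := (0, exp t).

Definition beta_r (p : pt) : R :=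
  real (Lim (fun t => t - dM p (ray t)) p_infty).

(* the level set {beta = eta} of the cusp, lifted to the horocycle
   {Im z = e^eta} centred at oo, is an embedded horosphere quotient:
   the only elements of Gamma(2) bringing a point of the horocycle back
   to it are those fixing oo (c = 0). *)
Definition embedded_level (eta : R) : Prop :=
  forall g p, Gamma2 g -> inH p -> snd p = exp eta ->
    snd (act g p) = exp eta -> mc g = 0.

Definition eta0 : R :=
  real (Glb_Rbar (fun eta => forall eta', eta <= eta' -> embedded_level eta')).

Definition beta_e1 (p : pt) : R := beta_r p - eta0.

(* geodesic lines of H (unit speed, complete); they are exactly the lifts
   of the geodesic lines of M *)
Definition geodesic_line (c : R -> pt) : Prop :=
  (forall t, inH (c t)) /\ (forall s t, dH (c s) (c t) = Rabs (s - t)).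

Definition closed_geodesic (c : R -> pt) : Prop :=
  geodesic_line c /\
  exists T g, 0 < T /\ Gamma2 g /\ forall t, c (t + T) = act g (c t).

Definition simple_line (c : R -> pt) : Prop :=
  forall s t g, Gamma2 g -> c s = act g (c t) -> s = t.

Definition height_e1 (c : R -> pt) : R :=
  real (Lub_Rbar (fun h => exists t, h = beta_e1 (c t))).

Definition h2_M_e1 : R :=
  real (Glb_Rbar (fun h => exists c, closed_geodesic c /\ h = height_e1 c)).

Definition tends_to_bd (c : R -> pt) (l : Rbar) (xi : R) : Prop :=
  is_lim (fun t => fst (c t)) l xi /\ is_lim (fun t => snd (c t)) l 0.

(* c converges at l to the cusp e2 (Gamma(2)-orbit of 0) / e3 (orbit of 1) *)
Definition to_e2 (c : R -> pt) (l : Rbar) : Prop :=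
  exists g, Gamma2 g /\ tends_to_bd c l (mb g / md g).
Definition to_e3 (c : R -> pt) (l : Rbar) : Prop :=
  exists g, Gamma2 g /\ tends_to_bd c l ((ma g + mb g) / (mc g + md g)).

(* In the upper half-plane model M = H / Gamma(2), the maximal horoball at
   the cusp oo is {Im z > 1/2}, so beta_e1 p = ln (2 sup_g Im (g p)).
   Every geodesic line is t |-> M (i e^t) with det M = 1, and for g with
   bottom row (c, d) the translate g M (i e^t) reaches the maximal height
   1 / (2 |Q_M (c, d)|), where Q_M (c, d) = (c p + d r) (c q + d s) vanishes
   exactly when -d/c is an endpoint.  If the line is the axis of a
   hyperbolic g in Gamma(2) with eigenvalues lam, mu, then (mu - lam) Q_M is
   the integral fixed-point form of g, which has no rational zero; taking a
   bottom row minimising |Q_M| and comparing it with its translates by the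
   rows (2, 2m + 1) shows that some |Q_M| < 1, so every closed geodesic has
   positive height.  The axes of [[4k^2 - 2k + 1, 2k], [4k^2, 2k + 1]] have
   height at most 1/(2k), hence h''_{M,e1} = 0, while for the line from 0
   to 1 the form Q is (c + d) d, an odd integer, so its height is 0. *)

From Stdlib Require Import Reals ZArith Lra Lia Psatz Classical.
From Coquelicot Require Import Coquelicot.
Open Scope R_scope.

(** * Real Möbius transformations *)

Definition rmat := (R * R * R * R)%type.

Definition mob (m : rmat) (p : pt) : pt :=
  let '(a, b, c, d) := m in
  let x := fst p in let y := snd p in
  let den := (c * x + d) ^ 2 + (c * y) ^ 2 in
  (((a * x + b) * (c * x + d) + a * c * y ^ 2) / den, y / den).

Definition rdet (m : rmat) : R := let '(a, b, c, d) := m in a * d - b * c.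

Definition rmul (m n : rmat) : rmat :=
  let '(a, b, c, d) := m in let '(a', b', c', d') := n in
  (a * a' + b * c', a * b' + b * d', c * a' + d * c', c * b' + d * d').

Definition rI : rmat := (1, 0, 0, 1).

Definition adj (m : rmat) : rmat := let '(a, b, c, d) := m in (d, - b, - c, a).

Definition toR (g : mat) : rmat := (ma g, mb g, mc g, md g).

Ltac mat_eq := f_equal; [f_equal; [f_equal|]|].

Lemma act_mob g p : act g p = mob (toR g) p.
Proof. destruct g as [[[a b] c] d]; reflexivity. Qed.

Lemma rdet_mul m n : rdet (rmul m n) = rdet m * rdet n.
Proof. destruct m as [[[a b] c] d], n as [[[a' b'] c'] d']; unfold rdet, rmul; ring. Qed.

Lemma rdet_adj m : rdet (adj m) = rdet m.
Proof. destruct m as [[[a b] c] d]; unfold rdet, adj; ring. Qed.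

Lemma rmul_assoc m n k : rmul m (rmul n k) = rmul (rmul m n) k.
Proof.
  destruct m as [[[a b] c] d], n as [[[a' b'] c'] d'], k as [[[x y] z] w].
  unfold rmul; mat_eq; ring.
Qed.

Lemma rmul_I_r m : rmul m rI = m.
Proof. destruct m as [[[a b] c] d]; unfold rmul, rI; mat_eq; ring. Qed.

Lemma rmul_I_l m : rmul rI m = m.
Proof. destruct m as [[[a b] c] d]; unfold rmul, rI; mat_eq; ring. Qed.

Lemma adj_l m : rdet m = 1 -> rmul (adj m) m = rI.
Proof. destruct m as [[[a b] c] d]; unfold rdet, rmul, adj, rI; intros; mat_eq; lra. Qed.

Lemma adj_r m : rdet m = 1 -> rmul m (adj m) = rI.
Proof. destruct m as [[[a b] c] d]; unfold rdet, rmul, adj, rI; intros; mat_eq; lra. Qed.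

Lemma det1_row2_nz a b c d : a * d - b * c = 1 -> c <> 0 \/ d <> 0.
Proof. intros H. destruct (Req_dec c 0); [right; intro; subst; nra | left; auto]. Qed.

Lemma mob_den_pos c d x y : 0 < y -> c <> 0 \/ d <> 0 ->
  0 < (c * x + d) ^ 2 + (c * y) ^ 2.
Proof.
  intros Hy H. destruct (Req_dec c 0) as [->|Hc].
  - destruct H as [H|H]; [lra|]. pose proof (Rsqr_pos_lt d H). unfold Rsqr in *. nra.
  - pose proof (Rsqr_pos_lt c Hc). unfold Rsqr in *.
    assert (0 < c * c * (y * y)) by (apply Rmult_lt_0_compat; nra).
    pose proof (pow2_ge_0 (c * x + d)). nra.
Qed.

Lemma mob_inH m p : rdet m = 1 -> inH p -> inH (mob m p).
Proof.
  destruct m as [[[a b] c] d], p as [x y]; unfold inH, rdet, mob; cbn [fst snd].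
  intros Hd Hy. apply Rdiv_lt_0_compat, mob_den_pos; eauto using det1_row2_nz.
Qed.

Lemma mob_id p : inH p -> mob rI p = p.
Proof. destruct p as [x y]; unfold mob, rI, inH; cbn [fst snd]; intros; f_equal; field. Qed.

Lemma mob_sqdist a b c d x1 y1 x2 y2 :
  a * d - b * c = 1 -> 0 < y1 -> 0 < y2 ->
  let D1 := (c * x1 + d) ^ 2 + (c * y1) ^ 2 in
  let D2 := (c * x2 + d) ^ 2 + (c * y2) ^ 2 in
  (((a * x1 + b) * (c * x1 + d) + a * c * y1 ^ 2) / D1 -
   ((a * x2 + b) * (c * x2 + d) + a * c * y2 ^ 2) / D2) ^ 2 + (y1 / D1 - y2 / D2) ^ 2
  = ((x1 - x2) ^ 2 + (y1 - y2) ^ 2) / (D1 * D2).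
Proof.
  intros Hd Hy1 Hy2 D1 D2.
  assert (0 < D1) by (apply mob_den_pos; eauto using det1_row2_nz).
  assert (0 < D2) by (apply mob_den_pos; eauto using det1_row2_nz).
  replace (y1 / D1) with ((a * d - b * c) * y1 / D1) by (rewrite Hd; field; lra).
  replace (y2 / D2) with ((a * d - b * c) * y2 / D2) by (rewrite Hd; field; lra).
  replace ((x1 - x2) ^ 2 + (y1 - y2) ^ 2)
    with ((a * d - b * c) ^ 2 * ((x1 - x2) ^ 2 + (y1 - y2) ^ 2)) by (rewrite Hd; ring).
  unfold D1, D2 in *. field. lra.
Qed.

Lemma dH_mob m p q : rdet m = 1 -> inH p -> inH q -> dH (mob m p) (mob m q) = dH p q.
Proof.
  destruct m as [[[a b] c] d], p as [x1 y1], q as [x2 y2]; unfold inH, rdet, dH, mob; cbn [fst snd].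
  intros Hd Hy1 Hy2. do 2 f_equal.
  assert (0 < (c * x1 + d) ^ 2 + (c * y1) ^ 2) by (apply mob_den_pos; eauto using det1_row2_nz).
  assert (0 < (c * x2 + d) ^ 2 + (c * y2) ^ 2) by (apply mob_den_pos; eauto using det1_row2_nz).
  rewrite (mob_sqdist a b c d x1 y1 x2 y2 Hd Hy1 Hy2). field. repeat split; lra.
Qed.

(* Keeping the determinant in the imaginary part makes composition a
   polynomial identity. *)
Definition mob_det (m : rmat) (p : pt) : pt :=
  let '(a, b, c, d) := m in
  let x := fst p in let y := snd p in
  let den := (c * x + d) ^ 2 + (c * y) ^ 2 in
  (((a * x + b) * (c * x + d) + a * c * y ^ 2) / den, (a * d - b * c) * y / den).

Lemma mob_det_mob m p : rdet m = 1 -> mob_det m p = mob m p.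
Proof.
  destruct m as [[[a b] c] d]; unfold rdet, mob_det, mob; intros H; rewrite H, Rmult_1_l; reflexivity.
Qed.

Lemma mob_comp m n p : rdet m = 1 -> rdet n = 1 -> inH p ->
  mob (rmul m n) p = mob m (mob n p).
Proof.
  intros Hm Hn Hp.
  assert (Hmn : rdet (rmul m n) = 1) by (rewrite rdet_mul, Hm, Hn; ring).
  pose proof (mob_inH n p Hn Hp) as Hq. rewrite <- (mob_det_mob _ _ Hn) in Hq.
  rewrite <- (mob_det_mob _ _ Hmn), <- (mob_det_mob _ _ Hm), <- (mob_det_mob _ _ Hn).
  destruct m as [[[a b] c] d], n as [[[a' b'] c'] d'], p as [x y].
  unfold inH, rdet, mob_det, rmul in *; cbn [fst snd] in *.
  assert (0 < (c' * x + d') ^ 2 + (c' * y) ^ 2) by (apply mob_den_pos; eauto using det1_row2_nz).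
  assert (0 < ((c * a' + d * c') * x + (c * b' + d * d')) ^ 2 + ((c * a' + d * c') * y) ^ 2)
    by (apply mob_den_pos; eauto using det1_row2_nz).
  set (D' := (c' * x + d') ^ 2 + (c' * y) ^ 2) in *.
  set (X := ((a' * x + b') * (c' * x + d') + a' * c' * y ^ 2) / D') in *.
  set (Y := (a' * d' - b' * c') * y / D') in *.
  assert (0 < (c * X + d) ^ 2 + (c * Y) ^ 2) by (apply mob_den_pos; eauto using det1_row2_nz).
  assert (E : (c * X + d) ^ 2 + (c * Y) ^ 2
    = (((c * a' + d * c') * x + (c * b' + d * d')) ^ 2 + ((c * a' + d * c') * y) ^ 2) / D')
    by (unfold X, Y, D'; field; unfold D' in *; lra).
  rewrite E. unfold X, Y, D'. f_equal; field; repeat split; unfold D' in *; lra.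
Qed.

Lemma mob_cancel m n p : rdet m = 1 -> rdet n = 1 -> rmul m n = rI -> inH p ->
  mob m (mob n p) = p.
Proof. intros Hm Hn Hmn Hp. rewrite <- mob_comp, Hmn; auto using mob_id. Qed.

(** * Hyperbolic cosine and the distance *)

Definition ch (x : R) := (exp x + exp (- x)) / 2.

Lemma exp_le x y : x <= y -> exp x <= exp y.
Proof. intros [H|H]; [left; apply exp_increasing; auto | subst; lra]. Qed.

Lemma ln_1p_le a : 0 <= a -> ln (1 + a) <= a.
Proof. intros Ha. rewrite <- (ln_exp a) at 2. apply ln_le; [lra | apply exp_ineq1_le]. Qed.

Lemma exp_mul_opp x : exp x * exp (- x) = 1.
Proof. rewrite <- exp_plus, Rplus_opp_r. apply exp_0. Qed.

Lemma ch_ge1 x : 1 <= ch x.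
Proof.
  unfold ch. pose proof (exp_pos x). pose proof (exp_pos (- x)). pose proof (exp_mul_opp x).
  pose proof (pow2_ge_0 (exp x - exp (- x))).
  assert (2 <= exp x + exp (- x)) by nra. lra.
Qed.

Lemma ch_abs x : ch (Rabs x) = ch x.
Proof.
  unfold ch. destruct (Rle_or_lt 0 x).
  - rewrite Rabs_right by lra; reflexivity.
  - rewrite Rabs_left, Ropp_involutive by lra. lra.
Qed.

Lemma arcosh_ch x : arcosh (ch x) = Rabs x.
Proof.
  unfold arcosh, ch. pose proof (exp_pos x). pose proof (exp_pos (- x)).
  assert (E : forall A B, A * B = 1 -> (A + B) / 2 * ((A + B) / 2) - 1 = ((A - B) / 2) ^ 2)
    by (intros A B HAB; rewrite <- HAB; field).
  rewrite (E _ _ (exp_mul_opp x)).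
  destruct (Rle_or_lt 0 x) as [Hx|Hx].
  - assert (exp (- x) <= exp x) by (apply exp_le; lra).
    rewrite sqrt_pow2, Rabs_right by lra.
    replace ((exp x + exp (- x)) / 2 + (exp x - exp (- x)) / 2) with (exp x) by field.
    apply ln_exp.
  - assert (exp x <= exp (- x)) by (apply exp_le; lra).
    replace (((exp x - exp (- x)) / 2) ^ 2) with (((exp (- x) - exp x) / 2) ^ 2) by field.
    rewrite sqrt_pow2, Rabs_left by lra.
    replace ((exp x + exp (- x)) / 2 + (exp (- x) - exp x) / 2) with (exp (- x)) by field.
    apply ln_exp.
Qed.

Lemma arcosh_inv X s : 1 <= X -> arcosh X = s -> X = ch s.
Proof.
  unfold arcosh, ch. intros HX Hs.
  pose proof (sqrt_sqrt (X * X - 1)). pose proof (sqrt_pos (X * X - 1)).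
  set (S := sqrt (X * X - 1)) in *.
  assert (E1 : exp s = X + S) by (rewrite <- Hs; apply exp_ln; lra).
  assert (E2 : exp (- s) = X - S) by (rewrite exp_Ropp, E1; field_simplify_eq; nra).
  rewrite E1, E2; field.
Qed.

Lemma arcosh_le X Y : 1 <= X -> X <= Y -> arcosh X <= arcosh Y.
Proof.
  unfold arcosh; intros HX HXY. pose proof (sqrt_pos (X * X - 1)). apply ln_le; [lra|].
  apply Rplus_le_compat; auto. apply sqrt_le_1_alt. nra.
Qed.

Lemma arcosh_nonneg X : 1 <= X -> 0 <= arcosh X.
Proof.
  intros HX. rewrite <- Rabs_R0, <- arcosh_ch.
  assert (ch 0 = 1) by (unfold ch; rewrite Ropp_0, exp_0; lra).
  apply arcosh_le; lra.
Qed.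

Lemma arcosh_le_ln X : 1 <= X -> arcosh X <= ln (2 * X).
Proof.
  unfold arcosh; intros HX. pose proof (sqrt_pos (X * X - 1)). apply ln_le; [lra|].
  assert (sqrt (X * X - 1) <= X); [|lra].
  assert (Hs : sqrt (X * X - 1) <= sqrt (X * X)) by (apply sqrt_le_1_alt; lra).
  rewrite sqrt_square in Hs by lra. exact Hs.
Qed.

Lemma dH_arg_ge1 p q : inH p -> inH q ->
  1 <= 1 + ((fst p - fst q) ^ 2 + (snd p - snd q) ^ 2) / (2 * snd p * snd q).
Proof.
  unfold inH; intros Hp Hq.
  assert (0 <= ((fst p - fst q) ^ 2 + (snd p - snd q) ^ 2) / (2 * snd p * snd q)); [|lra].
  apply Rdiv_le_0_compat; [pose proof (pow2_ge_0 (fst p - fst q)); pose proof (pow2_ge_0 (snd p - snd q)); lra | nra].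
Qed.

Lemma dH_nonneg p q : inH p -> inH q -> 0 <= dH p q.
Proof. intros; apply arcosh_nonneg, dH_arg_ge1; auto. Qed.

Lemma dH_eq_ch p q s : inH p -> inH q -> dH p q = Rabs s ->
  1 + ((fst p - fst q) ^ 2 + (snd p - snd q) ^ 2) / (2 * snd p * snd q) = ch s.
Proof. intros Hp Hq H. rewrite <- ch_abs. apply arcosh_inv; auto using dH_arg_ge1. Qed.

Lemma dH_vertical s t : dH (0, exp s) (0, exp t) = Rabs (s - t).
Proof.
  unfold dH; cbn [fst snd]. rewrite <- arcosh_ch. f_equal. unfold ch.
  rewrite Ropp_minus_distr. unfold Rminus. rewrite !exp_plus, !exp_Ropp.
  pose proof (exp_pos s); pose proof (exp_pos t). field. lra.
Qed.

(** * The group Gamma(2) *)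

Definition gid : mat := (1%Z, 0%Z, 0%Z, 1%Z).

Definition ginv (g : mat) : mat := let '(a, b, c, d) := g in (d, (- b)%Z, (- c)%Z, a).

Definition gmul (g h : mat) : mat :=
  let '(a, b, c, d) := g in let '(a', b', c', d') := h in
  ((a * a' + b * c')%Z, (a * b' + b * d')%Z, (c * a' + d * c')%Z, (c * b' + d * d')%Z).

Lemma Gamma2_id : Gamma2 gid.
Proof. repeat split; exists 0%Z; lia. Qed.

Lemma Gamma2_inv g : Gamma2 g -> Gamma2 (ginv g).
Proof.
  destruct g as [[[a b] c] d]; intros [H1 [H2 [[k Hb] [[l Hc] H5]]]].
  repeat split; auto; [lia | exists (- k)%Z; lia | exists (- l)%Z; lia].
Qed.

Lemma ginv_ginv g : ginv (ginv g) = g.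
Proof. destruct g as [[[a b] c] d]; cbn; rewrite !Z.opp_involutive; reflexivity. Qed.

Lemma Gamma2_mul g h : Gamma2 g -> Gamma2 h -> Gamma2 (gmul g h).
Proof.
  destruct g as [[[a b] c] d], h as [[[a' b'] c'] d'].
  intros [H1 [[x1 H2] [[x2 H3] [[x3 H4] [x4 H5]]]]] [K1 [[y1 K2] [[y2 K3] [[y3 K4] [y4 K5]]]]].
  subst. split; [nia|]. split; [|split; [|split]].
  - exists (2 * x1 * y1 + x1 + y1 + 2 * x2 * y3)%Z; nia.
  - exists ((2 * x1 + 1) * y2 + x2 * (2 * y4 + 1))%Z; nia.
  - exists (x3 * (2 * y1 + 1) + (2 * x4 + 1) * y3)%Z; nia.
  - exists (2 * x3 * y2 + 2 * x4 * y4 + x4 + y4)%Z; nia.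
Qed.

Lemma rdet_toR g : Gamma2 g -> rdet (toR g) = 1.
Proof.
  destruct g as [[[a b] c] d]; unfold rdet, toR, ma, mb, mc, md. intros [H _].
  rewrite <- !mult_IZR, <- minus_IZR, H. reflexivity.
Qed.

Lemma act_inH g p : Gamma2 g -> inH p -> inH (act g p).
Proof. intros; rewrite act_mob; auto using mob_inH, rdet_toR. Qed.

Lemma act_gid p : inH p -> act gid p = p.
Proof. intros Hp. rewrite act_mob. apply mob_id; auto. Qed.

Lemma act_ginv g p : Gamma2 g -> inH p -> act (ginv g) (act g p) = p.
Proof.
  intros Hg Hp. rewrite !act_mob.
  apply mob_cancel; auto using rdet_toR, Gamma2_inv.
  pose proof (rdet_toR g Hg) as H.
  destruct g as [[[a b] c] d]; unfold toR, ginv, rmul, rdet, rI, ma, mb, mc, md in *.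
  rewrite !opp_IZR. mat_eq; lra.
Qed.

Lemma dH_act g p q : Gamma2 g -> inH p -> inH q -> dH (act g p) (act g q) = dH p q.
Proof. intros; rewrite !act_mob; auto using dH_mob, rdet_toR. Qed.

Lemma dH_act_r g p q : Gamma2 g -> inH p -> inH q -> dH p (act g q) = dH (act (ginv g) p) q.
Proof.
  intros Hg Hp Hq. rewrite <- (dH_act (ginv g)), act_ginv; auto using Gamma2_inv, act_inH.
Qed.

Lemma IZR_even_sq_ge4 c : Z.Even c -> c <> 0%Z -> 4 <= IZR c * IZR c.
Proof. intros [k Hk] Hc. rewrite <- mult_IZR. apply IZR_le. subst. nia. Qed.

(* The bottom-left entry of an element of Gamma(2) is 0 or at least 2 in
   absolute value, which bounds how high an orbit can climb. *)
Lemma Im_act_le g p : Gamma2 g -> inH p -> snd (act g p) <= snd p + / (4 * snd p).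
Proof.
  destruct g as [[[a b] c] d], p as [x y]; unfold inH, act, ma, mb, mc, md; cbn [fst snd].
  intros [Hdet [_ [_ [Hc _]]]] Hy.
  assert (0 < / (4 * y)) by (apply Rinv_0_lt_compat; lra).
  destruct (Z.eq_dec c 0) as [->|Hc0].
  - assert (IZR d * IZR d = 1).
    { rewrite <- mult_IZR. apply f_equal. rewrite Z.mul_0_r, Z.sub_0_r in Hdet.
      destruct (Z.mul_eq_1 _ _ Hdet) as [-> | ->]; lia. }
    replace ((0 * x + IZR d) ^ 2 + (0 * y) ^ 2) with 1 by (simpl; lra). lra.
  - pose proof (IZR_even_sq_ge4 c Hc Hc0).
    pose proof (pow2_ge_0 (IZR c * x + IZR d)).
    assert (Hden : 4 * (y * y) <= (IZR c * x + IZR d) ^ 2 + (IZR c * y) ^ 2) by nra.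
    apply Rle_trans with (/ (4 * y)); [|lra].
    apply Rle_trans with (y / (4 * (y * y))); [|right; field; lra].
    apply Rmult_le_compat_l; [lra|]. apply Rinv_le_contravar; nra.
Qed.

(** * The quotient distance and the Busemann function *)

Lemma Glb_Rbar_bounds (E : R -> Prop) m e : E e -> (forall x, E x -> m <= x) ->
  m <= real (Glb_Rbar E) <= e /\ Glb_Rbar E = Finite (real (Glb_Rbar E)).
Proof.
  intros He Hm. destruct (Glb_Rbar_correct E) as [H1 H2].
  assert (A1 : Rbar_le m (Glb_Rbar E)) by (apply H2; intros x Hx; apply Hm; auto).
  assert (A2 : Rbar_le (Glb_Rbar E) e) by (apply H1; auto).
  destruct (Glb_Rbar E); simpl in *; tauto.
Qed.

Lemma Lub_Rbar_bounds (E : R -> Prop) M e : E e -> (forall x, E x -> x <= M) ->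
  e <= real (Lub_Rbar E) <= M.
Proof.
  intros He HM. destruct (Lub_Rbar_correct E) as [H1 H2].
  assert (A1 : Rbar_le (Lub_Rbar E) M) by (apply H2; intros x Hx; apply HM; auto).
  assert (A2 : Rbar_le e (Lub_Rbar E)) by (apply H1; auto).
  destruct (Lub_Rbar E); simpl in *; tauto.
Qed.

Lemma dM_le p q g : inH p -> inH q -> Gamma2 g -> dM p q <= dH p (act g q).
Proof.
  intros Hp Hq Hg. unfold dM.
  apply (Glb_Rbar_bounds _ 0); [exists g; auto |].
  intros x [h [Hh ->]]. apply dH_nonneg; auto using act_inH.
Qed.

Lemma dM_ge p q L : inH p -> inH q -> (forall g, Gamma2 g -> L <= dH p (act g q)) ->
  L <= dM p q.
Proof.
  intros Hp Hq HL. unfold dM.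
  set (E := fun r => exists g, Gamma2 g /\ r = dH p (act g q)).
  destruct (Glb_Rbar_bounds E 0 (dH p (act gid q))) as [_ HF].
  - exists gid; split; auto using Gamma2_id.
  - intros x [g [Hg ->]]. apply dH_nonneg; auto using act_inH.
  - assert (A : Rbar_le L (Glb_Rbar E)).
    { apply Glb_Rbar_correct. intros x [g [Hg ->]]. apply HL; auto. }
    rewrite HF in A. exact A.
Qed.

Lemma ray_inH t : inH (ray t).
Proof. apply exp_pos. Qed.

Lemma dH_ray_lower z t : inH z -> t - ln (snd z) <= dH z (ray t).
Proof.
  destruct z as [x y]; unfold inH, ray, dH; cbn [fst snd]; intros Hy.
  pose proof (exp_pos t).
  apply Rle_trans with (arcosh (ch (t - ln y))); [rewrite arcosh_ch; apply Rle_abs |].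
  apply arcosh_le; [apply ch_ge1 |].
  assert (E1 : exp (t - ln y) = exp t * / y)
    by (unfold Rminus; rewrite exp_plus, exp_Ropp, exp_ln; auto).
  assert (E2 : exp (- (t - ln y)) = / exp t * y)
    by (rewrite Ropp_minus_distr; unfold Rminus; rewrite exp_plus, exp_Ropp, exp_ln; auto; ring).
  unfold ch. rewrite E1, E2.
  replace (1 + ((x - 0) ^ 2 + (y - exp t) ^ 2) / (2 * y * exp t))
    with ((exp t * / y + / exp t * y) / 2 + x ^ 2 / (2 * y * exp t)) by (field; lra).
  assert (0 <= x ^ 2 / (2 * y * exp t)) by (apply Rdiv_le_0_compat; [apply pow2_ge_0 | nra]).
  lra.
Qed.

Lemma dH_ray_upper z t : inH z ->
  dH z (ray t) <= t - ln (snd z) + ((fst z) ^ 2 + (snd z) ^ 2) * exp (- (2 * t)).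
Proof.
  destruct z as [x y]; unfold inH, ray; cbn [fst snd]; intros Hy.
  pose proof (exp_pos t). pose proof (exp_pos (- (2 * t))).
  assert (HK : 0 <= (x ^ 2 + y ^ 2) * exp (- (2 * t)))
    by (pose proof (pow2_ge_0 x); pose proof (pow2_ge_0 y); nra).
  unfold dH; cbn [fst snd].
  eapply Rle_trans; [apply arcosh_le_ln, (dH_arg_ge1 (x, y) (0, exp t)); [exact Hy | apply exp_pos] |].
  replace (2 * (1 + ((x - 0) ^ 2 + (y - exp t) ^ 2) / (2 * y * exp t)))
    with (exp t * / y * (1 + (x ^ 2 + y ^ 2) * exp (- (2 * t)))).
  2:{ replace (exp (- (2 * t))) with (/ (exp t * exp t)); [field; lra |].
      rewrite <- exp_plus, <- exp_Ropp. f_equal; ring. }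
  assert (0 < / y) by (apply Rinv_0_lt_compat; lra).
  rewrite ln_mult, ln_mult, ln_exp, ln_Rinv by (try apply Rmult_lt_0_compat; lra).
  pose proof (ln_1p_le _ HK). lra.
Qed.

Lemma exp_m2n_geom n : exp (- (2 * INR n)) = exp (-2) ^ n.
Proof.
  induction n as [|n IH]; [simpl; rewrite Rmult_0_r, Ropp_0; apply exp_0 |].
  rewrite S_INR, <- tech_pow_Rmult, <- IH, <- exp_plus. f_equal; ring.
Qed.

Lemma is_lim_seq_exp_decay L K : is_lim_seq (fun n => L - K * exp (- (2 * INR n))) L.
Proof.
  assert (H : is_lim_seq (fun n => K * exp (- (2 * INR n))) 0).
  { apply is_lim_seq_ext with (fun n => K * exp (-2) ^ n); [intros; rewrite exp_m2n_geom; auto |].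
    replace (Finite 0) with (Rbar_mult K 0) by (simpl; f_equal; ring).
    apply is_lim_seq_scal_l, is_lim_seq_geom.
    rewrite Rabs_right by (left; apply exp_pos).
    rewrite <- exp_0. apply exp_increasing. lra. }
  pose proof (is_lim_seq_minus' _ _ L 0 (is_lim_seq_const L) H) as H'.
  rewrite Rminus_0_r in H'. exact H'.
Qed.

Lemma Lim_seq_squeeze (u l : nat -> R) (L U : R) : (forall n, l n <= u n) -> (forall n, u n <= U) ->
  is_lim_seq l L -> L <= real (Lim_seq u) <= U.
Proof.
  intros H1 H2 H3.
  assert (A1 : Rbar_le (Lim_seq l) (Lim_seq u)) by (apply Lim_seq_le_loc; exists 0%nat; auto).
  assert (A2 : Rbar_le (Lim_seq u) (Lim_seq (fun _ => U))) by (apply Lim_seq_le_loc; exists 0%nat; auto).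
  rewrite Lim_seq_const in A2. rewrite (is_lim_seq_unique _ _ H3) in A1.
  destruct (Lim_seq u); simpl in *; tauto.
Qed.

(* Coquelicot's [Lim f p_infty] is the limit of [f] along the integers. *)
Lemma beta_r_Lim_seq p : beta_r p = real (Lim_seq (fun n => INR n - dM p (ray (INR n)))).
Proof. reflexivity. Qed.

Lemma beta_r_bounds p g B : inH p -> Gamma2 g -> 0 < B ->
  (forall h, Gamma2 h -> snd (act h p) <= B) ->
  ln (snd (act g p)) <= beta_r p <= ln B.
Proof.
  intros Hp Hg HB Hh. rewrite beta_r_Lim_seq.
  set (q := act g p). assert (Hq : inH q) by (apply act_inH; auto).
  apply Lim_seq_squeeze with
    (l := fun n => ln (snd q) - ((fst q) ^ 2 + (snd q) ^ 2) * exp (- (2 * INR n)));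
    [intros n | intros n | apply is_lim_seq_exp_decay].
  - pose proof (dM_le p (ray (INR n)) (ginv g) Hp (ray_inH _) (Gamma2_inv g Hg)) as H.
    rewrite dH_act_r, ginv_ginv in H by auto using Gamma2_inv, ray_inH.
    pose proof (dH_ray_upper q (INR n) Hq). unfold q in *. lra.
  - assert (INR n - ln B <= dM p (ray (INR n))); [|lra].
    apply dM_ge; auto using ray_inH. intros h Hh'.
    rewrite dH_act_r by auto using ray_inH.
    pose proof (Gamma2_inv h Hh') as Hi.
    pose proof (dH_ray_lower (act (ginv h) p) (INR n) (act_inH _ _ Hi Hp)).
    pose proof (ln_le _ _ (act_inH _ _ Hi Hp) (Hh _ Hi)). lra.
Qed.

Lemma Glb_Rbar_approx (E : R -> Prop) a : (forall x, E x -> a < x) ->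
  (forall eps, 0 < eps -> exists x, E x /\ x < a + eps) -> Glb_Rbar E = Finite a.
Proof.
  intros Hlow Happ. apply is_glb_Rbar_unique. split.
  - intros x Hx. simpl. left. apply Hlow; auto.
  - intros [b| |] Hb; simpl; auto.
    + destruct (Rle_or_lt b a) as [h|h]; auto.
      destruct (Happ (b - a)) as [x [Hx Hxb]]; [lra |].
      specialize (Hb x Hx). simpl in Hb. lra.
    + destruct (Happ 1) as [x [Hx _]]; [lra |]. exact (Hb x Hx).
Qed.

(* The horocycle Im z = y is embedded exactly when y > 1/2: the element
   (1, 0, 2, 1) maps -1/2 + i/2 to 1/2 + i/2. *)
Lemma embedded_level_gt eta : - ln 2 < eta -> embedded_level eta.
Proof.
  intros Heta [[[a b] c] d] [x y] Hg Hp Hy Hy'.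
  assert (He : / 2 < exp eta).
  { rewrite <- (exp_ln (/ 2)), ln_Rinv by lra. apply exp_increasing; lra. }
  unfold inH, act, ma, mb, mc, md in *; cbn [fst snd] in *.
  destruct Hg as [Hdet [_ [_ [Hc _]]]].
  destruct (Z.eq_dec c 0) as [->|Hc0]; [reflexivity | exfalso].
  pose proof (IZR_even_sq_ge4 c Hc Hc0).
  set (D := (IZR c * x + IZR d) ^ 2 + (IZR c * y) ^ 2) in *.
  assert (Hden : 4 * (y * y) <= D) by (pose proof (pow2_ge_0 (IZR c * x + IZR d)); unfold D; nra).
  assert (HD1 : D = 1).
  { rewrite <- Hy in Hy'. assert (HD : 0 < D) by nra.
    assert (E : y / D * D = y * D) by (rewrite Hy'; reflexivity).
    replace (y / D * D) with y in E by (field; lra). nra. }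
  nra.
Qed.

Lemma not_embedded_level : ~ embedded_level (- ln 2).
Proof.
  intros H.
  assert (Hg : Gamma2 (1%Z, 0%Z, 2%Z, 1%Z)).
  { repeat split; [exists 0%Z | exists 0%Z | exists 1%Z | exists 0%Z]; lia. }
  assert (Hexp : exp (- ln 2) = / 2) by (rewrite exp_Ropp, exp_ln; lra).
  specialize (H _ (- / 2, / 2) Hg). unfold inH, act, mc, ma, mb, md in H; cbn [fst snd] in H.
  rewrite Hexp in H.
  assert (IZR 2 = 0) by (apply H; [lra | reflexivity | field]). lra.
Qed.

Lemma eta0_eq : eta0 = - ln 2.
Proof.
  unfold eta0.
  rewrite (Glb_Rbar_eqset _ (fun eta => - ln 2 < eta)).
  - rewrite (Glb_Rbar_approx _ (- ln 2)); auto.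
    intros eps Heps. exists (- ln 2 + eps / 2). lra.
  - intros eta; split.
    + intros H. destruct (Rlt_or_le (- ln 2) eta) as [h|h]; auto.
      exfalso. apply not_embedded_level, H; auto.
    + intros h eta' h'. apply embedded_level_gt. lra.
Qed.

(* [beta_e1 p] is [ln (2 * sup_g Im (g p))]. *)
Lemma beta_e1_bounds p g B : inH p -> Gamma2 g -> 0 < B ->
  (forall h, Gamma2 h -> snd (act h p) <= B) ->
  ln (2 * snd (act g p)) <= beta_e1 p <= ln (2 * B).
Proof.
  intros Hp Hg HB Hh. unfold beta_e1. rewrite eta0_eq.
  pose proof (beta_r_bounds p g B Hp Hg HB Hh). pose proof (act_inH g p Hg Hp).
  rewrite !ln_mult by (unfold inH in *; lra). lra.
Qed.

Lemma beta_e1_ge p g : inH p -> Gamma2 g -> ln (2 * snd (act g p)) <= beta_e1 p.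
Proof.
  intros Hp Hg. assert (Hy : 0 < snd p) by exact Hp.
  assert (0 < / (4 * snd p)) by (apply Rinv_0_lt_compat; lra).
  apply (beta_e1_bounds p g (snd p + / (4 * snd p))); auto; [lra |].
  intros; apply Im_act_le; auto.
Qed.

Lemma height_e1_bounds c B t0 g : (forall t, inH (c t)) -> 0 < B ->
  (forall t h, Gamma2 h -> snd (act h (c t)) <= B) -> Gamma2 g ->
  ln (2 * snd (act g (c t0))) <= height_e1 c <= ln (2 * B).
Proof.
  intros Hc HB Hh Hg. unfold height_e1.
  pose proof (beta_e1_ge (c t0) g (Hc t0) Hg).
  enough (beta_e1 (c t0) <= real (Lub_Rbar (fun h => exists t, h = beta_e1 (c t))) <= ln (2 * B))
    by lra.
  apply Lub_Rbar_bounds; [exists t0; auto |].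
  intros x [t ->]. apply (beta_e1_bounds (c t) gid B); auto using Gamma2_id.
Qed.

(** * Geodesic lines *)

Definition curve (M : rmat) (t : R) : pt := mob M (0, exp t).

Lemma curve_inH M t : rdet M = 1 -> inH (curve M t).
Proof. intros; apply mob_inH, exp_pos; auto. Qed.

Lemma curve_geodesic M : rdet M = 1 -> geodesic_line (curve M).
Proof.
  intros HM; split; [intros; apply curve_inH; auto |].
  intros s t. unfold curve. rewrite dH_mob by (auto; apply exp_pos). apply dH_vertical.
Qed.

Lemma act_curve g M t : Gamma2 g -> rdet M = 1 ->
  act g (curve M t) = mob (rmul (toR g) M) (0, exp t).
Proof. intros; unfold curve; rewrite act_mob, mob_comp; auto using rdet_toR; apply exp_pos. Qed.

Lemma exp_1_gt_1 : 1 < exp 1.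
Proof. pose proof (exp_increasing 0 1) as H. rewrite exp_0 in H. apply H; lra. Qed.

Lemma dH_vertical_eq y0 x y s : 0 < y0 -> 0 < y -> dH (0, y0) (x, y) = Rabs s ->
  x * x + y * y + y0 * y0 = y * y0 * (exp s + exp (- s)).
Proof.
  intros Hy0 Hy H. apply dH_eq_ch in H; [| exact Hy0 | exact Hy].
  unfold ch in H; cbn [fst snd] in H.
  transitivity (2 * y0 * y * (1 + ((0 - x) ^ 2 + (y0 - y) ^ 2) / (2 * y0 * y))); [field; lra |].
  rewrite H. field.
Qed.

Lemma vertical_point_unique x y t : 0 < y ->
  dH (0, 1) (x, y) = Rabs t -> dH (0, exp 1) (x, y) = Rabs (1 - t) -> (x, y) = (0, exp t).
Proof.
  intros Hy H1 H2.
  pose proof exp_1_gt_1. pose proof (exp_pos t).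
  apply dH_vertical_eq in H1; [| lra | auto]. apply dH_vertical_eq in H2; [| apply exp_pos | auto].
  rewrite exp_Ropp in H1.
  rewrite Ropp_minus_distr in H2. unfold Rminus in H2. rewrite !exp_plus, !exp_Ropp in H2.
  set (E := exp t) in *. set (e := exp 1) in *.
  assert (HyE : y = E).
  { assert (D : e * e - 1 = y * (e * e - 1) * / E).
    { transitivity ((x * x + y * y + e * e) - (x * x + y * y + 1 * 1)); [ring |].
      rewrite H1, H2. field; lra. }
    apply (f_equal (fun z => z * E)) in D.
    replace (y * (e * e - 1) * / E * E) with (y * (e * e - 1)) in D by (field; lra).
    assert (K : (e * e - 1) * (E - y) = 0) by nra.
    apply Rmult_integral in K. destruct K as [K|K]; nra. }
  subst y. assert (x * x = 0).
  { assert (E * (E + / E) = E * E + 1) by (field; lra). nra. }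
  f_equal. nra.
Qed.

Lemma sq_eq_same_sign x y : x * x = y * y -> 0 <= x * y -> x = y.
Proof.
  intros H Hs. assert (K : (x - y) * (x + y) = 0) by lra.
  apply Rmult_integral in K. destruct K; nra.
Qed.

Lemma normalize_to_i p : inH p -> exists A, rdet A = 1 /\ mob A p = (0, 1).
Proof.
  destruct p as [x0 y0]; unfold inH; cbn [snd]; intros Hy0.
  set (s0 := sqrt y0). assert (0 < s0) by (apply sqrt_lt_R0; auto).
  assert (Hs0 : y0 = s0 * s0) by (symmetry; apply sqrt_sqrt; lra).
  exists (/ s0, - x0 / s0, 0, s0). split; [unfold rdet; field; lra |].
  unfold mob; cbn [fst snd]. rewrite Hs0. f_equal; field; lra.
Qed.

Lemma mob_rotation_vertical al be y : al * al + be * be = 1 -> 0 < y ->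
  mob (al, be, - be, al) (0, y)
  = (al * be * (1 - y * y) / (al * al + be * be * (y * y)), y / (al * al + be * be * (y * y))).
Proof.
  intros H Hy. assert (0 < al * al + be * be * (y * y)).
  { destruct (Req_dec be 0) as [->|Hbe]; [nra |].
    pose proof (Rsqr_pos_lt be Hbe). unfold Rsqr in *. pose proof (Rle_0_sqr al). unfold Rsqr in *.
    assert (0 < be * be * (y * y)) by (apply Rmult_lt_0_compat; nra). lra. }
  unfold mob; cbn [fst snd]. f_equal; field; nra.
Qed.

Lemma circle_Im_range e u v : 1 < e -> 0 < v -> u * u = (e - v) * (v * e - 1) / e ->
  0 <= e - v /\ 0 <= v * e - 1.
Proof.
  intros He Hv Hu2.
  assert (Hprod : 0 <= (e - v) * (v * e - 1)).
  { replace ((e - v) * (v * e - 1)) with (e * (u * u)) by (rewrite Hu2; field; lra).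
    pose proof (Rle_0_sqr u). unfold Rsqr in *. nra. }
  destruct (Rle_or_lt v e) as [h|h].
  - split; [lra |]. destruct (Rle_or_lt 0 (v * e - 1)) as [h'|h']; auto.
    assert (e - v <= 0) by nra. assert (v * e > 1) by nra. lra.
  - exfalso. assert (v * e - 1 > 0) by nra. nra.
Qed.

(* al^2 and be^2 are solved for from the imaginary part of the image of i e,
   and the sign of al from its real part. *)
Lemma rotation_to_circle u v : 0 < v -> dH (0, 1) (u, v) = 1 ->
  exists K, rdet K = 1 /\ mob K (0, 1) = (0, 1) /\ mob K (0, exp 1) = (u, v).
Proof.
  intros Hv H1. assert (H : dH (0, 1) (u, v) = Rabs 1) by (rewrite Rabs_R1; exact H1).
  apply dH_vertical_eq in H; [| lra | auto].
  rewrite exp_Ropp in H. pose proof exp_1_gt_1 as He. set (e := exp 1) in *.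
  assert (Hu2 : u * u = (e - v) * (v * e - 1) / e).
  { transitivity (v * 1 * (e + / e) - v * v - 1 * 1); [lra | field; lra]. }
  destruct (circle_Im_range e u v He Hv Hu2) as [Hev Hve].
  assert (Hd : 0 < v * (e * e - 1)) by (apply Rmult_lt_0_compat; nra).
  set (B2 := (e - v) / (v * (e * e - 1))). set (A2 := e * (v * e - 1) / (v * (e * e - 1))).
  assert (0 <= B2) by (apply Rdiv_le_0_compat; lra).
  assert (0 <= A2) by (apply Rdiv_le_0_compat; nra).
  set (be := sqrt B2). assert (Hbe : be * be = B2) by (apply sqrt_sqrt; auto).
  assert (0 <= be) by apply sqrt_pos.
  set (a0 := sqrt A2). assert (Ha0 : a0 * a0 = A2) by (apply sqrt_sqrt; auto).
  assert (0 <= a0) by apply sqrt_pos.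
  set (al := if Rle_dec 0 u then - a0 else a0).
  assert (Hal : al * al = A2) by (unfold al; destruct (Rle_dec 0 u); nra).
  assert (Hsum : al * al + be * be = 1) by (rewrite Hal, Hbe; unfold A2, B2; field; nra).
  assert (Hden : al * al + be * be * (e * e) = e / v) by (rewrite Hal, Hbe; unfold A2, B2; field; nra).
  exists (al, be, - be, al). split; [unfold rdet; lra | split].
  - rewrite mob_rotation_vertical by lra.
    replace (al * al + be * be * (1 * 1)) with 1 by lra. f_equal; field.
  - rewrite mob_rotation_vertical, Hden by lra. f_equal; [| field; lra].
    apply sq_eq_same_sign.
    + transitivity ((al * al) * (be * be) * ((1 - e * e) * v / e) ^ 2); [field; lra |].
      rewrite Hal, Hbe, Hu2. unfold A2, B2. field. nra.
    + assert (0 < v / e) by (apply Rdiv_lt_0_compat; lra).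
      assert (0 <= a0 * be * (e * e - 1) * (v / e))
        by (apply Rmult_le_pos; [apply Rmult_le_pos; [apply Rmult_le_pos |] |]; nra).
      unfold al. destruct (Rle_dec 0 u).
      * replace (- a0 * be * (1 - e * e) / (e / v) * u) with (a0 * be * (e * e - 1) * (v / e) * u)
          by (field; lra). apply Rmult_le_pos; lra.
      * replace (a0 * be * (1 - e * e) / (e / v) * u) with (a0 * be * (e * e - 1) * (v / e) * (- u))
          by (field; lra). apply Rmult_le_pos; lra.
Qed.

Lemma geodesic_line_curve c : geodesic_line c -> exists M, rdet M = 1 /\ forall t, c t = curve M t.
Proof.
  intros [Hin Hd].
  destruct (normalize_to_i (c 0) (Hin 0)) as [A [HA HA0]].
  assert (Hw : dH (0, 1) (mob A (c 1)) = 1).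
  { rewrite <- HA0, dH_mob, Hd, Rminus_0_l, Rabs_Ropp; auto using Rabs_R1. }
  destruct (mob A (c 1)) as [u v] eqn:Hweq.
  assert (Hv : 0 < v) by (pose proof (mob_inH A (c 1) HA (Hin 1)) as h; rewrite Hweq in h; exact h).
  destruct (rotation_to_circle u v Hv Hw) as [K [HK [HK1 HKe]]].
  set (N := rmul (adj K) A).
  assert (HadjK : rdet (adj K) = 1) by (rewrite rdet_adj; auto).
  assert (HN : rdet N = 1) by (unfold N; rewrite rdet_mul, HadjK, HA; ring).
  assert (HN0 : mob N (c 0) = (0, 1)).
  { unfold N. rewrite mob_comp, HA0, <- HK1 at 1; auto. apply mob_cancel; auto using adj_l. exact Rlt_0_1. }
  assert (HN1 : mob N (c 1) = (0, exp 1)).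
  { unfold N. rewrite mob_comp, Hweq, <- HKe; auto. apply mob_cancel; auto using adj_l. apply exp_pos. }
  exists (adj N). split; [rewrite rdet_adj; auto |]. intros t.
  destruct (mob N (c t)) as [x y] eqn:Hz.
  assert (Hy : 0 < y) by (pose proof (mob_inH N (c t) HN (Hin t)) as h; rewrite Hz in h; exact h).
  assert (H0 : dH (0, 1) (x, y) = Rabs t).
  { rewrite <- HN0, <- Hz, dH_mob, Hd, Rminus_0_l, Rabs_Ropp; auto. }
  assert (H1 : dH (0, exp 1) (x, y) = Rabs (1 - t)) by (rewrite <- HN1, <- Hz, dH_mob, Hd; auto).
  unfold curve. rewrite <- (vertical_point_unique x y t Hy H0 H1), <- Hz.
  symmetry. apply mob_cancel; auto using adj_l. rewrite rdet_adj; auto.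
Qed.

(** * How high the translates of a geodesic climb *)

(* Vanishes exactly when -d/c is one of the endpoints M ∞ = p/r, M 0 = q/s
   of the geodesic [curve M]. *)
Definition endpoint_form (M : rmat) (c d : R) : R :=
  let '(p, q, r, s) := M in (c * p + d * r) * (c * q + d * s).

Lemma Im_mob_vertical (N : rmat) y :
  snd (mob N (0, y)) = let '(_, _, r, s) := N in y / (s ^ 2 + (r * y) ^ 2).
Proof. destruct N as [[[p q] r] s]; unfold mob; cbn [fst snd]. f_equal. ring. Qed.

Lemma Im_vertical_amgm r s y : 0 < y -> r <> 0 \/ s <> 0 ->
  y / (s ^ 2 + (r * y) ^ 2) * (2 * Rabs (r * s)) <= 1.
Proof.
  intros Hy Hrs.
  assert (Hd : 0 < s ^ 2 + (r * y) ^ 2) by (pose proof (mob_den_pos r s 0 y Hy Hrs); nra).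
  rewrite Rabs_mult.
  assert (E1 : s ^ 2 = Rabs s * Rabs s) by (rewrite <- Rabs_mult, Rabs_right; [ring | nra]).
  assert (E2 : (r * y) ^ 2 = (Rabs r * y) * (Rabs r * y)).
  { replace (Rabs r * y * (Rabs r * y)) with (Rabs (r * r) * (y * y)) by (rewrite Rabs_mult; ring).
    rewrite Rabs_right by nra. ring. }
  apply Rmult_le_reg_r with (s ^ 2 + (r * y) ^ 2); auto.
  replace (y / (s ^ 2 + (r * y) ^ 2) * (2 * (Rabs r * Rabs s)) * (s ^ 2 + (r * y) ^ 2))
    with (2 * (Rabs r * y) * Rabs s) by (field; lra).
  pose proof (pow2_ge_0 (Rabs s - Rabs r * y)). nra.
Qed.

Lemma Im_act_curve_le g M t : Gamma2 g -> rdet M = 1 ->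
  snd (act g (curve M t)) * (2 * Rabs (endpoint_form M (mc g) (md g))) <= 1.
Proof.
  intros Hg HM. rewrite act_curve, Im_mob_vertical by auto.
  assert (Hdet : rdet (rmul (toR g) M) = 1) by (rewrite rdet_mul, rdet_toR, HM by auto; ring).
  destruct M as [[[p q] r] s]; unfold toR, rmul, rdet, endpoint_form in *.
  apply Im_vertical_amgm; [apply exp_pos | eapply det1_row2_nz; exact Hdet].
Qed.

Lemma Im_act_curve_attained g M : Gamma2 g -> rdet M = 1 -> endpoint_form M (mc g) (md g) <> 0 ->
  exists t, snd (act g (curve M t)) * (2 * Rabs (endpoint_form M (mc g) (md g))) = 1.
Proof.
  intros Hg HM HQ. destruct M as [[[p q] r] s]. unfold endpoint_form in *.
  set (r' := mc g * p + md g * r) in *. set (s' := mc g * q + md g * s) in *.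
  assert (Hr : r' <> 0) by (intro h; apply HQ; rewrite h; ring).
  assert (Hs : s' <> 0) by (intro h; apply HQ; rewrite h; ring).
  assert (0 < Rabs r') by (apply Rabs_pos_lt; auto).
  assert (0 < Rabs s') by (apply Rabs_pos_lt; auto).
  exists (ln (Rabs s' / Rabs r')).
  rewrite act_curve, Im_mob_vertical, exp_ln by (auto; apply Rdiv_lt_0_compat; auto).
  destruct g as [[[a b] c] d]; unfold toR, rmul, ma, mb, mc, md in *; fold r' s'.
  rewrite Rabs_mult.
  assert (E1 : s' ^ 2 = Rabs s' * Rabs s') by (rewrite <- Rabs_mult, Rabs_right; [ring | nra]).
  assert (E2 : (r' * (Rabs s' / Rabs r')) ^ 2 = Rabs s' * Rabs s').
  { replace ((r' * (Rabs s' / Rabs r')) ^ 2) with (r' ^ 2 * (Rabs s' / Rabs r') ^ 2) by ring.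
    replace (r' ^ 2) with (Rabs r' * Rabs r') by (rewrite <- Rabs_mult, Rabs_right; [ring | nra]).
    field. lra. }
  rewrite E1, E2. field. repeat split; nra.
Qed.

(** * Closed geodesics *)

Lemma vertical_translation_diag (N : rmat) T : rdet N = 1 ->
  (forall t, mob N (0, exp t) = (0, exp (t + T))) ->
  exists lam mu, N = (lam, 0, 0, mu) /\ lam * mu = 1 /\ mu * mu = exp (- T).
Proof.
  destruct N as [[[n1 n2] n3] n4]; unfold rdet; intros Hdet H.
  pose proof (H 0) as H0. pose proof (H 1) as H1. unfold mob in H0, H1; cbn [fst snd] in H0, H1.
  rewrite exp_0, Rplus_0_l in H0. rewrite exp_plus in H1.
  pose proof exp_1_gt_1. pose proof (exp_pos T).
  set (e := exp 1) in *.
  injection H0 as R0 I0. injection H1 as R1 I1.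
  assert (0 < (n3 * 0 + n4) ^ 2 + (n3 * 1) ^ 2) by (apply mob_den_pos; eauto using det1_row2_nz; lra).
  assert (0 < (n3 * 0 + n4) ^ 2 + (n3 * e) ^ 2) by (apply mob_den_pos; eauto using det1_row2_nz; lra).
  assert (J0 : (n3 * 0 + n4) ^ 2 + (n3 * 1) ^ 2 = / exp T) by (rewrite <- I0; field; lra).
  assert (J1 : (n3 * 0 + n4) ^ 2 + (n3 * e) ^ 2 = / exp T).
  { transitivity (e / (e * exp T)); [rewrite <- I1; field | field]; lra. }
  assert (Hn3 : n3 = 0).
  { assert (K : n3 * n3 * (e * e - 1) = 0).
    { transitivity (((n3 * 0 + n4) ^ 2 + (n3 * e) ^ 2) - ((n3 * 0 + n4) ^ 2 + (n3 * 1) ^ 2));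
        [ring | rewrite J0, J1; ring]. }
    apply Rmult_integral in K. destruct K as [K|K]; [apply Rmult_integral in K; tauto | nra]. }
  subst n3.
  assert (Hn4 : n4 <> 0) by (intro; subst; lra).
  assert (Hn2 : n2 = 0).
  { replace ((0 * 0 + n4) ^ 2 + (0 * 1) ^ 2) with (n4 * n4) in R0 by ring.
    apply (f_equal (fun z => z * n4)) in R0. field_simplify in R0; lra. }
  subst n2. exists n1, n4. rewrite exp_Ropp. repeat split; lra.
Qed.

(* Vanishes at (x, y) exactly when -y/x is a fixed point of G. *)
Definition fixed_point_form (G : rmat) (x y : R) : R :=
  let '(a, b, c, d) := G in b * (x * x) + (d - a) * (x * y) - c * (y * y).

Lemma fixed_point_form_conj M lam mu x y : rdet M = 1 ->
  fixed_point_form (rmul M (rmul (lam, 0, 0, mu) (adj M))) x y = (mu - lam) * endpoint_form M x y.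
Proof. destruct M as [[[p q] r] s]; unfold rdet, fixed_point_form, rmul, adj, endpoint_form; intros; ring. Qed.

Lemma closed_geodesic_conj c : closed_geodesic c -> exists M g lam mu,
  rdet M = 1 /\ Gamma2 g /\ (forall t, c t = curve M t) /\
  toR g = rmul M (rmul (lam, 0, 0, mu) (adj M)) /\ lam * mu = 1 /\ mu * mu < 1.
Proof.
  intros [Hgeo [T [g [HT [Hg Hper]]]]].
  destruct (geodesic_line_curve c Hgeo) as [M [HM Hc]].
  set (N := rmul (adj M) (rmul (toR g) M)).
  assert (HgM : rdet (toR g) = 1) by (apply rdet_toR; auto).
  assert (HadjM : rdet (adj M) = 1) by (rewrite rdet_adj; auto).
  assert (HN : rdet N = 1) by (unfold N; rewrite !rdet_mul, HadjM, HgM, HM; ring).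
  assert (Hv : forall t, mob N (0, exp t) = (0, exp (t + T))).
  { intros t. unfold N.
    assert (rdet (rmul (toR g) M) = 1) by (rewrite rdet_mul, HgM, HM; ring).
    rewrite (mob_comp (adj M)), (mob_comp (toR g) M) by (auto; apply exp_pos).
    change (mob M (0, exp t)) with (curve M t). rewrite <- Hc, <- act_mob, <- Hper, Hc.
    apply mob_cancel; auto using adj_l. apply exp_pos. }
  destruct (vertical_translation_diag N T HN Hv) as [lam [mu [HNe [Hlm Hmu]]]].
  exists M, g, lam, mu. repeat split; auto.
  - rewrite <- HNe. unfold N.
    rewrite !rmul_assoc, adj_r, rmul_I_l, <- rmul_assoc, adj_r, rmul_I_r; auto.
  - rewrite Hmu, <- exp_0. apply exp_increasing. lra.
Qed.

Section IntegerForms.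
Local Open Scope Z_scope.

Lemma sq_minus4_square t s : t * t - 4 = s * s -> t * t = 4.
Proof.
  intros H.
  assert (H1 : (Z.abs t - Z.abs s) * (Z.abs t + Z.abs s) = 4).
  { transitivity (Z.abs t * Z.abs t - Z.abs s * Z.abs s); [ring |].
    rewrite <- !Z.abs_mul, !Z.abs_eq by nia. lia. }
  pose proof (Z.abs_nonneg t). pose proof (Z.abs_nonneg s).
  destruct (Z.eq_dec s 0) as [->|Hs]; [lia |].
  assert (Z.abs t - Z.abs s >= 1) by nia.
  assert (Z.abs t - Z.abs s = 1 \/ Z.abs t - Z.abs s >= 2) by lia. nia.
Qed.

Lemma rational_square X x D : x <> 0 -> X * X = D * (x * x) -> exists s, D = s * s.
Proof.
  intros Hx H.
  set (g := Z.gcd X x).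
  assert (Hg : g <> 0) by (unfold g; intro h; apply Z.gcd_eq_0 in h; lia).
  destruct (Z.gcd_divide_l X x) as [k1 Hk1], (Z.gcd_divide_r X x) as [k2 Hk2]. fold g in Hk1, Hk2.
  assert (Hc : Z.gcd k1 k2 = 1).
  { pose proof (Z.gcd_div_gcd X x g Hg eq_refl) as h.
    rewrite Hk1, Hk2, !Z.div_mul in h by auto. exact h. }
  assert (Hk : k1 * k1 = D * (k2 * k2)) by (rewrite Hk1, Hk2 in H; apply Z.mul_reg_r with (g * g); nia).
  assert (Hd : (k2 | k1 * k1)) by (exists (D * k2); lia).
  apply Z.gauss in Hd; [| rewrite Z.gcd_comm; auto].
  assert (Hd2 : (k2 | 1)) by (rewrite <- Hc; apply Z.gcd_greatest; auto using Z.divide_refl).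
  apply Z.divide_1_r in Hd2. exists k1. destruct Hd2; subst k2; lia.
Qed.

(* A hyperbolic integer matrix has irrational fixed points: the
   discriminant (a + d)^2 - 4 of its fixed-point form is not a square. *)
Lemma hyperbolic_fixed_point_form_nz a b c d x y : a * d - b * c = 1 -> (a + d) * (a + d) <> 4 ->
  x <> 0 \/ y <> 0 -> b * (x * x) + (d - a) * (x * y) - c * (y * y) <> 0.
Proof.
  intros Hdet Htr Hxy HF.
  destruct (Z.eq_dec c 0) as [->|Hc].
  - apply Htr. rewrite Z.mul_0_r, Z.sub_0_r in Hdet.
    destruct (Z.mul_eq_1 a d Hdet) as [-> | ->]; subst; lia.
  - assert (E : (2 * c * y - (d - a) * x) * (2 * c * y - (d - a) * x)
                = ((a + d) * (a + d) - 4) * (x * x)) by nia.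
    destruct (Z.eq_dec x 0) as [->|Hx0].
    + destruct Hxy as [|Hy]; [lia |]. nia.
    + destruct (rational_square _ _ _ Hx0 E) as [s Hs]. apply Htr, (sq_minus4_square _ s). lia.
Qed.

End IntegerForms.

Lemma odd_shift_window s : exists m : Z, -2 < s + (2 * IZR m + 1) <= 0.
Proof.
  destruct (archimed ((- s - 1) / 2)) as [Hu1 Hu2].
  exists (up ((- s - 1) / 2) - 1)%Z. rewrite minus_IZR. lra.
Qed.

Lemma odd_window_forces sig d2 : -2 < sig <= 0 -> 0 < d2 <= 1 ->
  1 <= Rabs (sig ^ 2 - d2) -> 1 <= Rabs ((sig + 2) ^ 2 - d2) -> sig = 0 /\ d2 = 1.
Proof.
  intros Hs Hd HA HB.
  destruct (Rle_or_lt 0 (sig ^ 2 - d2)) as [h|h].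
  - exfalso. rewrite Rabs_right in HA by lra.
    assert (sig < -1) by nra.
    destruct (Rle_or_lt 0 ((sig + 2) ^ 2 - d2)) as [h'|h'];
      [rewrite Rabs_right in HB by lra | rewrite Rabs_left in HB by lra]; nra.
  - rewrite Rabs_left in HA by lra. split; nra.
Qed.

(* With eta = n11/n21 and xi = n12/n22, the product below is
   n21 n22 ((eta + xi + 2m + 1)^2 - (eta - xi)^2) and eta - xi = 1/(n21 n22);
   its minimality in m pins eta + xi to an odd integer and eta - xi to ±1. *)
Lemma integral_ratio_of_minimal_row n11 n12 n21 n22 : n11 * n22 - n12 * n21 = 1 ->
  1 <= Rabs (n21 * n22) ->
  (forall m : Z, Rabs (n21 * n22)
     <= Rabs ((2 * n11 + (2 * IZR m + 1) * n21) * (2 * n12 + (2 * IZR m + 1) * n22))) ->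
  exists k : Z, n11 = IZR k * n21.
Proof.
  intros Hdet Hq Hm.
  assert (Hn : n21 * n22 <> 0) by (intro h; rewrite h, Rabs_R0 in Hq; lra).
  assert (H21 : n21 <> 0) by (intro h; apply Hn; rewrite h; ring).
  assert (H22 : n22 <> 0) by (intro h; apply Hn; rewrite h; ring).
  set (eta := n11 / n21). set (xi := n12 / n22).
  set (s := eta + xi). set (del := eta - xi).
  assert (Hdel : del * (n21 * n22) = 1) by (unfold del, eta, xi; rewrite <- Hdet; field; auto).
  assert (Hdel2 : 0 < del * del <= 1).
  { assert (Rabs del * Rabs (n21 * n22) = 1) by (rewrite <- Rabs_mult, Hdel; apply Rabs_R1).
    assert (del <> 0) by (intro h; rewrite h in Hdel; lra).
    pose proof (Rabs_pos_lt del ltac:(assumption)).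
    replace (del * del) with (Rabs del * Rabs del) by (rewrite <- Rabs_mult, Rabs_right; nra).
    split; nra. }
  assert (Hj : forall m : Z, 1 <= Rabs ((s + (2 * IZR m + 1)) ^ 2 - del * del)).
  { intros m. specialize (Hm m).
    replace ((2 * n11 + (2 * IZR m + 1) * n21) * (2 * n12 + (2 * IZR m + 1) * n22))
      with ((n21 * n22) * ((s + (2 * IZR m + 1)) ^ 2 - del * del)) in Hm
      by (unfold s, del, eta, xi; field; auto).
    rewrite (Rabs_mult (n21 * n22)) in Hm. pose proof (Rabs_pos_lt _ Hn).
    apply Rmult_le_reg_l with (Rabs (n21 * n22)); lra. }
  destruct (odd_shift_window s) as [m Hwin].
  pose proof (Hj (m + 1)%Z) as HB. rewrite plus_IZR in HB.
  replace (s + (2 * (IZR m + IZR 1) + 1)) with ((s + (2 * IZR m + 1)) + 2) in HB by (simpl; ring).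
  destruct (odd_window_forces _ _ Hwin Hdel2 (Hj m) HB) as [Hsig Hd1].
  assert (Hdd : del = 1 \/ del = -1).
  { assert (K : (del - 1) * (del + 1) = 0) by nra.
    apply Rmult_integral in K. destruct K; [left | right]; lra. }
  assert (Heta : n11 = eta * n21) by (unfold eta; field; auto).
  destruct Hdd as [Hd|Hd].
  - exists (- m)%Z. rewrite Heta, opp_IZR. f_equal. unfold s, del in *. lra.
  - exists (- m - 1)%Z. rewrite Heta, minus_IZR, opp_IZR. f_equal. unfold s, del in *. simpl. lra.
Qed.

Lemma Gamma2_row (m : Z) : exists a b, Gamma2 (a, b, 2%Z, (2 * m + 1)%Z).
Proof.
  destruct (Z.Even_or_Odd m) as [[u Hu]|[u Hu]].
  - exists 1%Z, m. repeat split; [lia | exists 0%Z | exists u | exists 1%Z | exists m]; lia.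
  - exists (-1)%Z, (- (m + 1))%Z.
    repeat split; [lia | exists (-1)%Z | exists (- u - 1)%Z | exists 1%Z | exists m]; lia.
Qed.

Lemma nat_min_exists (P : nat -> Prop) : (exists n, P n) ->
  exists n, P n /\ forall m, P m -> (n <= m)%nat.
Proof.
  intros [n Hn]. induction n as [n IH] using (well_founded_induction lt_wf).
  destruct (classic (exists m, P m /\ (m < n)%nat)) as [[m [Hm Hlt]]|Hno].
  - exact (IH m Hlt Hm).
  - exists n; split; auto. intros m Hm. apply Nat.nlt_ge. intro; apply Hno; eauto.
Qed.

Definition zc (g : mat) : Z := let '(_, _, c, _) := g in c.
Definition zd (g : mat) : Z := let '(_, _, _, d) := g in d.

Lemma mc_zc g : mc g = IZR (zc g).
Proof. destruct g as [[[a b] c] d]; reflexivity. Qed.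

Lemma md_zd g : md g = IZR (zd g).
Proof. destruct g as [[[a b] c] d]; reflexivity. Qed.

Lemma zd_nz g : Gamma2 g -> zd g <> 0%Z.
Proof. destruct g as [[[a b] c] d]; intros [_ [_ [_ [_ [k Hk]]]]]; cbn; lia. Qed.

Section ClosedGeodesic.

Variables (M : rmat) (g : mat) (lam mu : R).
Hypothesis HM : rdet M = 1.
Hypothesis Hg : Gamma2 g.
Hypothesis Hconj : toR g = rmul M (rmul (lam, 0, 0, mu) (adj M)).
Hypothesis Hlm : lam * mu = 1.
Hypothesis Hmu : mu * mu < 1.

Definition gform (x y : Z) : Z :=
  let '(a, b, c, d) := g in (b * (x * x) + (d - a) * (x * y) - c * (y * y))%Z.

Lemma gform_eq x y : IZR (gform x y) = (mu - lam) * endpoint_form M (IZR x) (IZR y).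
Proof.
  rewrite <- fixed_point_form_conj, <- Hconj by auto. unfold gform.
  destruct g as [[[a b] c] d]. unfold fixed_point_form, toR, ma, mb, mc, md.
  rewrite !minus_IZR, !plus_IZR, !mult_IZR, !minus_IZR. ring.
Qed.

Lemma mu_minus_lam_nz : mu - lam <> 0.
Proof. intro h. assert (mu = lam) by lra. nra. Qed.

Lemma gform_nz x y : (x <> 0 \/ y <> 0)%Z -> gform x y <> 0%Z.
Proof.
  pose proof mu_minus_lam_nz. pose proof Hg as Hg'. pose proof Hconj as Hc.
  unfold gform. destruct g as [[[a b] c] d]. destruct Hg' as [Hdet _].
  apply hyperbolic_fixed_point_form_nz; auto.
  intro h. apply (f_equal IZR) in h. rewrite mult_IZR, plus_IZR in h.
  assert (E : IZR a + IZR d = lam + mu).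
  { destruct M as [[[p q] r] s]. unfold toR, rmul, adj, ma, md, rdet in Hc, HM.
    injection Hc as E1 _ _ E4. rewrite E1, E4.
    transitivity ((lam + mu) * (p * s - q * r)); [ring | rewrite HM; ring]. }
  rewrite E in h. simpl in h. assert ((mu - lam) * (mu - lam) = 0) by nra.
  apply Rmult_integral in H0. tauto.
Qed.

Lemma endpoint_form_row_ge h : Gamma2 h ->
  1 <= Rabs (mu - lam) * Rabs (endpoint_form M (mc h) (md h)).
Proof.
  intros Hh. rewrite <- Rabs_mult, mc_zc, md_zd, <- gform_eq, <- abs_IZR. apply IZR_le.
  pose proof (gform_nz (zc h) (zd h) (or_intror (zd_nz h Hh))). lia.
Qed.

Lemma closed_orbit_bounded t h : Gamma2 h -> snd (act h (curve M t)) <= Rabs (mu - lam) / 2.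
Proof.
  intros Hh. pose proof (Im_act_curve_le h M t Hh HM). pose proof (endpoint_form_row_ge h Hh).
  pose proof (Rabs_pos (endpoint_form M (mc h) (md h))).
  pose proof (act_inH h _ Hh (curve_inH M t HM)) as Hy. unfold inH in Hy.
  assert (0 < Rabs (mu - lam)) by (apply Rabs_pos_lt, mu_minus_lam_nz).
  apply Rmult_le_reg_r with (2 * Rabs (endpoint_form M (mc h) (md h))); [nra |].
  replace (Rabs (mu - lam) / 2 * (2 * Rabs (endpoint_form M (mc h) (md h))))
    with (Rabs (mu - lam) * Rabs (endpoint_form M (mc h) (md h))) by field.
  lra.
Qed.

(* The values of [gform] on bottom rows are integers, so the minimum of
   |endpoint_form| over bottom rows of Gamma(2) is attained. *)
Lemma minimal_row_exists : exists hs, Gamma2 hs /\ forall h, Gamma2 h ->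
  Rabs (endpoint_form M (mc hs) (md hs)) <= Rabs (endpoint_form M (mc h) (md h)).
Proof.
  destruct (nat_min_exists (fun n => exists h, Gamma2 h /\ Z.to_nat (Z.abs (gform (zc h) (zd h))) = n))
    as [n0 [[hs [Hhs Hn0]] Hmin]]; [eexists; exists gid; split; [apply Gamma2_id | reflexivity] |].
  exists hs. split; auto. intros h Hh.
  assert (Hz : (Z.abs (gform (zc hs) (zd hs)) <= Z.abs (gform (zc h) (zd h)))%Z).
  { specialize (Hmin _ (ex_intro _ h (conj Hh eq_refl))). lia. }
  apply IZR_le in Hz. rewrite !abs_IZR, !gform_eq, !Rabs_mult, <- !mc_zc, <- !md_zd in Hz.
  pose proof (Rabs_pos_lt _ mu_minus_lam_nz).
  apply Rmult_le_reg_l with (Rabs (mu - lam)); auto.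
Qed.

(* Otherwise a minimal row yields a rational zero of [gform]. *)
Lemma exists_small_row : exists h, Gamma2 h /\ Rabs (endpoint_form M (mc h) (md h)) < 1.
Proof.
  destruct (classic (exists h, Gamma2 h /\ Rabs (endpoint_form M (mc h) (md h)) < 1)) as [|Hno];
    auto; exfalso.
  destruct minimal_row_exists as [[[[a1 b1] c1] d1] [Hhs Hmin]].
  pose proof Hhs as [Hd1 [[o1 Ho1] [_ [[e2 He2] _]]]].
  pose proof gform_eq as HF. pose proof gform_nz as HNZ.
  destruct M as [[[p q] r] s]. unfold rdet in HM.
  destruct (integral_ratio_of_minimal_row (IZR a1 * p + IZR b1 * r) (IZR a1 * q + IZR b1 * s)
              (IZR c1 * p + IZR d1 * r) (IZR c1 * q + IZR d1 * s)) as [k Hk].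
  - transitivity (IZR (a1 * d1 - b1 * c1) * (p * s - q * r)); [rewrite minus_IZR, !mult_IZR; ring |].
    rewrite Hd1, HM; ring.
  - apply Rnot_lt_le. intro h. apply Hno. exists (a1, b1, c1, d1). auto.
  - intros m. destruct (Gamma2_row m) as [a' [b' Hr]].
    pose proof (Hmin _ (Gamma2_mul _ _ Hr Hhs)) as Hq.
    unfold endpoint_form, gmul, mc, md in Hq. eapply Rle_trans; [exact Hq | right].
    f_equal. rewrite !plus_IZR, !mult_IZR, plus_IZR, mult_IZR. ring.
  - assert (Hzero : IZR (gform (a1 - k * c1) (b1 - k * d1)) = 0).
    { rewrite HF. unfold endpoint_form. rewrite !minus_IZR, !mult_IZR.
      replace ((IZR a1 - IZR k * IZR c1) * p + (IZR b1 - IZR k * IZR d1) * r)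
        with ((IZR a1 * p + IZR b1 * r) - IZR k * (IZR c1 * p + IZR d1 * r)) by ring.
      rewrite Hk. ring. }
    apply eq_IZR in Hzero. revert Hzero. apply HNZ. left. lia.
Qed.

Lemma closed_orbit_high : exists t h, Gamma2 h /\ / 2 < snd (act h (curve M t)).
Proof.
  destruct exists_small_row as [h [Hh Hsmall]].
  pose proof (endpoint_form_row_ge h Hh).
  assert (HQ : endpoint_form M (mc h) (md h) <> 0) by (intro h0; rewrite h0, Rabs_R0 in *; lra).
  destruct (Im_act_curve_attained h M Hh HM HQ) as [t Ht].
  pose proof (Rabs_pos_lt _ HQ).
  exists t, h. split; auto. nra.
Qed.

End ClosedGeodesic.

Lemma closed_geodesic_height_pos c : closed_geodesic c -> 0 < height_e1 c.
Proof.
  intros Hc. destruct (closed_geodesic_conj c Hc) as [M [g [lam [mu [HM [Hg [Hcurve [Hconj [Hlm Hmu]]]]]]]]].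
  destruct (closed_orbit_high M g lam mu HM Hg Hconj Hlm Hmu) as [t0 [h [Hh Hhigh]]].
  assert (0 < Rabs (mu - lam)) by (apply Rabs_pos_lt; eapply mu_minus_lam_nz; eauto).
  destruct (height_e1_bounds c (Rabs (mu - lam) / 2) t0 h) as [Hlow _]; auto.
  - intros t; rewrite Hcurve; apply curve_inH; auto.
  - lra.
  - intros t h' Hh'. rewrite Hcurve. apply (closed_orbit_bounded M g lam mu); auto.
  - rewrite Hcurve in Hlow. assert (0 < ln (2 * snd (act h (curve M t0)))); [| lra].
    rewrite <- ln_1. apply ln_increasing; lra.
Qed.

(** * Closed geodesics of arbitrarily small height *)

(* Columns: eigenvectors (b, lam - a) and (b, mu - a), scaled to determinant 1. *)
Definition eigenbasis (a b lam mu : R) : rmat :=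
  (/ (mu - lam), b, (lam - a) / (b * (mu - lam)), mu - a).

Lemma eigenbasis_det a b lam mu : b <> 0 -> lam <> mu -> rdet (eigenbasis a b lam mu) = 1.
Proof. intros Hb Hlm. unfold rdet, eigenbasis. field. split; [lra | auto]. Qed.

Lemma eigenbasis_diag a b c d lam mu : b <> 0 -> lam <> mu ->
  lam * lam - (a + d) * lam + (a * d - b * c) = 0 ->
  mu * mu - (a + d) * mu + (a * d - b * c) = 0 ->
  rmul (a, b, c, d) (eigenbasis a b lam mu) = rmul (eigenbasis a b lam mu) (lam, 0, 0, mu).
Proof.
  intros Hb Hlm Hl Hm. assert (mu - lam <> 0) by lra. unfold rmul, eigenbasis. mat_eq.
  - field. auto.
  - ring.
  - apply (Rmult_eq_reg_r (b * (mu - lam))); [| apply Rmult_integral_contrapositive; auto].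
    field_simplify; auto. nra.
  - nra.
Qed.

Section OddValues.
Local Open Scope Z_scope.

Definition kform (k e y : Z) : Z := e * e + 2 * k * e * y - y * y.

Lemma kform_odd_base k e y : 1 <= k -> 0 < e -> 0 < y -> Z.Odd e -> Z.Odd y -> y <= k * e ->
  2 * k <= Z.abs (kform k e y).
Proof.
  intros Hk He Hy [u Hu] [v Hv] Hyk. unfold kform.
  destruct (Z_le_gt_dec y e) as [h|h].
  - assert (e * e - y * y >= 0) by nia. assert (k * e * y >= k) by nia. lia.
  - assert (y >= 3) by lia. assert (2 * k * e - y >= k) by nia.
    assert (y * (2 * k * e - y) >= 3 * k) by nia. nia.
Qed.

Lemma kform_odd_positive k e0 y0 : Z.Odd e0 -> Z.Odd y0 -> exists e y,
  0 < e /\ 0 < y /\ Z.Odd e /\ Z.Odd y /\ Z.abs e + Z.abs y = Z.abs e0 + Z.abs y0 /\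
  Z.abs (kform k e y) = Z.abs (kform k e0 y0).
Proof.
  intros Oe Oy.
  assert (Oe' : Z.Odd (- e0)) by (destruct Oe as [u Hu]; exists (- u - 1); lia).
  assert (Oy' : Z.Odd (- y0)) by (destruct Oy as [u Hu]; exists (- u - 1); lia).
  assert (e0 <> 0) by (destruct Oe; lia). assert (y0 <> 0) by (destruct Oy; lia).
  unfold kform.
  destruct (Z_lt_le_dec 0 e0), (Z_lt_le_dec 0 y0).
  - exists e0, y0; repeat split; auto.
  - exists (- y0), e0; repeat split; auto; [lia | lia |]. rewrite <- Z.abs_opp. f_equal. ring.
  - exists y0, (- e0); repeat split; auto; [lia | lia |]. rewrite <- Z.abs_opp. f_equal. ring.
  - exists (- e0), (- y0); repeat split; auto; [lia | lia | lia |]. f_equal. ring.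
Qed.

(* Descent: (e, y) -> (y - 2 k e, e) changes only the sign of [kform] and
   decreases |e| + |y| until y <= k e. *)
Lemma kform_odd_ge k e y : 1 <= k -> Z.Odd e -> Z.Odd y -> 2 * k <= Z.abs (kform k e y).
Proof.
  intros Hk.
  remember (Z.to_nat (Z.abs e + Z.abs y)) as n eqn:Hn. revert e y Hn.
  induction n as [n IH] using (well_founded_induction lt_wf). intros e0 y0 Hn Oe0 Oy0.
  destruct (kform_odd_positive k e0 y0 Oe0 Oy0) as [e [y [He [Hy [Oe [Oy [Hm HK]]]]]]].
  rewrite <- HK.
  destruct (Z_le_gt_dec y (k * e)) as [h|h]; [apply kform_odd_base; auto |].
  set (e' := y - 2 * k * e).
  assert (Oe' : Z.Odd e') by (destruct Oy as [u Hu]; exists (u - k * e); unfold e'; lia).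
  assert (HK' : Z.abs (kform k e' e) = Z.abs (kform k e y)).
  { unfold kform, e'. rewrite <- Z.abs_opp. f_equal. ring. }
  rewrite <- HK'. apply (IH (Z.to_nat (Z.abs e' + Z.abs e))); auto.
  assert (k * e > 0) by nia. unfold e'.
  destruct (Z_le_gt_dec 0 (y - 2 * k * e)); lia.
Qed.

End OddValues.

Lemma mob_diag_vertical lam mu y : lam * mu = 1 -> 0 < y ->
  mob (lam, 0, 0, mu) (0, y) = (0, y * (lam * lam)).
Proof.
  intros Hlm Hy. assert (lam <> 0) by (intro h; rewrite h in Hlm; lra).
  replace mu with (/ lam) by (field_simplify_eq; lra).
  unfold mob; cbn [fst snd]. f_equal; field; auto.
Qed.

Section Family.

Variable k : Z.
Hypothesis Hk : (1 <= k)%Z.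

Definition gk : mat := ((4 * k * k - 2 * k + 1)%Z, (2 * k)%Z, (4 * k * k)%Z, (2 * k + 1)%Z).

Definition trk : R := 4 * IZR k * IZR k + 2.
Definition lamk : R := (trk + sqrt (trk * trk - 4)) / 2.
Definition muk : R := (trk - sqrt (trk * trk - 4)) / 2.
Definition Mk : rmat := eigenbasis (ma gk) (mb gk) lamk muk.

Lemma IZR_k_ge1 : 1 <= IZR k.
Proof. apply IZR_le in Hk. auto. Qed.

Lemma Gamma2_gk : Gamma2 gk.
Proof.
  repeat split; [nia | exists (2 * k * k - k)%Z | exists k | exists (2 * k * k)%Z | exists k]; lia.
Qed.

Lemma lamk_minus_muk : lamk - muk = sqrt (trk * trk - 4).
Proof. unfold lamk, muk. field. Qed.

Lemma lamk_gt_muk : muk < lamk.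
Proof.
  pose proof IZR_k_ge1. assert (0 < sqrt (trk * trk - 4)) by (apply sqrt_lt_R0; unfold trk; nra).
  pose proof lamk_minus_muk. lra.
Qed.

Lemma lamk_muk : lamk * muk = 1.
Proof.
  pose proof IZR_k_ge1. assert (Hs : sqrt (trk * trk - 4) * sqrt (trk * trk - 4) = trk * trk - 4)
    by (apply sqrt_sqrt; unfold trk; nra).
  unfold lamk, muk. nra.
Qed.

Lemma lamk_gt1 : 1 < lamk.
Proof.
  pose proof lamk_muk. pose proof lamk_gt_muk. pose proof IZR_k_ge1.
  assert (0 < lamk) by (unfold lamk; pose proof (sqrt_pos (trk * trk - 4)); unfold trk in *; nra).
  nra.
Qed.

Lemma toR_gk : toR gk = (4 * IZR k * IZR k - 2 * IZR k + 1, 2 * IZR k, 4 * IZR k * IZR k, 2 * IZR k + 1).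
Proof. unfold toR, gk, ma, mb, mc, md. rewrite ?plus_IZR, ?minus_IZR, ?mult_IZR. reflexivity. Qed.

Lemma Mk_det : rdet Mk = 1.
Proof.
  pose proof IZR_k_ge1. pose proof lamk_gt_muk. unfold Mk.
  apply eigenbasis_det; [unfold mb, gk; rewrite mult_IZR; lra | lra].
Qed.

Lemma gk_diag : rmul (toR gk) Mk = rmul Mk (lamk, 0, 0, muk).
Proof.
  pose proof IZR_k_ge1. pose proof lamk_gt_muk. pose proof lamk_muk.
  assert (Hsum : lamk + muk = trk) by (unfold lamk, muk; field).
  unfold Mk. rewrite toR_gk. unfold ma, mb, gk. rewrite ?plus_IZR, ?minus_IZR, ?mult_IZR.
  apply eigenbasis_diag; [lra | lra | unfold trk in *; nra ..].
Qed.

Lemma gk_conj : toR gk = rmul Mk (rmul (lamk, 0, 0, muk) (adj Mk)).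
Proof. rewrite rmul_assoc, <- gk_diag, <- rmul_assoc, adj_r, rmul_I_r; auto using Mk_det. Qed.

Lemma curve_Mk_closed : closed_geodesic (curve Mk).
Proof.
  pose proof lamk_gt1. split; [apply curve_geodesic, Mk_det |].
  exists (2 * ln lamk), gk. split; [| split; [apply Gamma2_gk |]].
  - assert (0 < ln lamk) by (rewrite <- ln_1; apply ln_increasing; lra). lra.
  - intros t. rewrite act_curve, gk_diag by (apply Gamma2_gk || apply Mk_det).
    rewrite mob_comp; [| apply Mk_det | unfold rdet; pose proof lamk_muk; lra | apply exp_pos].
    rewrite mob_diag_vertical by (apply lamk_muk || apply exp_pos).
    unfold curve. do 3 f_equal.
    replace (2 * ln lamk) with (ln lamk + ln lamk) by ring.
    rewrite !exp_plus, exp_ln by lra. ring.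
Qed.

Lemma endpoint_form_Mk_ge h : Gamma2 h ->
  4 * IZR k * IZR k <= (lamk - muk) * Rabs (endpoint_form Mk (mc h) (md h)).
Proof.
  intros Hh. pose proof lamk_gt_muk.
  replace ((lamk - muk) * Rabs (endpoint_form Mk (mc h) (md h)))
    with (Rabs ((muk - lamk) * endpoint_form Mk (mc h) (md h)))
    by (rewrite Rabs_mult, Rabs_left by lra; ring).
  rewrite <- fixed_point_form_conj, <- gk_conj, toR_gk by apply Mk_det.
  destruct h as [[[a b] c] d]. destruct Hh as [_ [_ [_ [[u Hu] [v Hv]]]]].
  unfold fixed_point_form, mc, md.
  replace (2 * IZR k * (IZR c * IZR c)
           + (2 * IZR k + 1 - (4 * IZR k * IZR k - 2 * IZR k + 1)) * (IZR c * IZR d)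
           - 4 * IZR k * IZR k * (IZR d * IZR d))
    with (- (2 * IZR k * IZR (kform k d (d + c))))
    by (unfold kform; repeat rewrite ?plus_IZR, ?minus_IZR, ?mult_IZR; ring).
  rewrite Rabs_Ropp, <- !mult_IZR, <- abs_IZR. apply IZR_le.
  assert (Z.Odd (d + c)) by (exists (u + v)%Z; lia). assert (Z.Odd d) by (exists v; lia).
  pose proof (kform_odd_ge k d (d + c) Hk ltac:(assumption) ltac:(assumption)).
  rewrite Z.abs_mul. nia.
Qed.

Lemma Im_act_curve_Mk_le h t : Gamma2 h -> snd (act h (curve Mk t)) <= / 2 + / (4 * IZR k).
Proof.
  intros Hh. pose proof IZR_k_ge1. pose proof lamk_gt_muk.
  pose proof (Im_act_curve_le h Mk t Hh Mk_det). pose proof (endpoint_form_Mk_ge h Hh).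
  set (Q := Rabs (endpoint_form Mk (mc h) (md h))) in *.
  set (I := snd (act h (curve Mk t))) in *.
  assert (0 < I) by (apply (act_inH h _ Hh (curve_inH Mk t Mk_det))).
  assert (Hl : lamk - muk <= 4 * IZR k * IZR k + 2 * IZR k).
  { rewrite lamk_minus_muk, <- (sqrt_square (4 * IZR k * IZR k + 2 * IZR k)) by nra.
    apply sqrt_le_1_alt. unfold trk. nra. }
  assert (0 < Q) by nra.
  assert (I <= (lamk - muk) / (8 * IZR k * IZR k)).
  { apply Rmult_le_reg_r with (2 * Q); [lra |]. apply Rle_trans with 1; [lra |].
    apply Rmult_le_reg_l with (8 * IZR k * IZR k); [nra |]. field_simplify; nra. }
  apply Rle_trans with ((4 * IZR k * IZR k + 2 * IZR k) / (8 * IZR k * IZR k)); [| right; field; lra].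
  apply Rle_trans with ((lamk - muk) / (8 * IZR k * IZR k)); auto.
  apply Rmult_le_compat_r; auto. left; apply Rinv_0_lt_compat; nra.
Qed.

Lemma height_curve_Mk_le : height_e1 (curve Mk) <= / (2 * IZR k).
Proof.
  pose proof IZR_k_ge1. assert (0 < / (4 * IZR k)) by (apply Rinv_0_lt_compat; lra).
  destruct (height_e1_bounds (curve Mk) (/ 2 + / (4 * IZR k)) 0 gid) as [_ H1];
    auto using Gamma2_id, Im_act_curve_Mk_le; [intros; apply curve_inH, Mk_det | lra |].
  eapply Rle_trans; [exact H1 |].
  replace (2 * (/ 2 + / (4 * IZR k))) with (1 + / (2 * IZR k)) by (field; lra).
  apply ln_1p_le. left. apply Rinv_0_lt_compat; lra.
Qed.

End Family.

Lemma h2_M_e1_eq_0 : h2_M_e1 = 0.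
Proof.
  unfold h2_M_e1. rewrite (Glb_Rbar_approx _ 0); [reflexivity | |].
  - intros x [c [Hc ->]]. apply closed_geodesic_height_pos; auto.
  - intros eps Heps.
    destruct (archimed (/ eps)) as [Hu _]. set (k := up (/ eps)) in *.
    assert (0 < / eps) by (apply Rinv_0_lt_compat; auto).
    assert (Hk : (1 <= k)%Z) by (assert (Hk0 : 0 < IZR k) by lra; apply lt_IZR in Hk0; lia).
    exists (height_e1 (curve (Mk k))). split; [exists (curve (Mk k)); auto using curve_Mk_closed |].
    pose proof (height_curve_Mk_le k Hk).
    assert (/ (2 * IZR k) < eps); [| lra].
    rewrite <- (Rinv_inv eps). apply Rinv_lt_contravar; [| lra].
    apply Rmult_lt_0_compat; lra.
Qed.

(** * The geodesic line from 0 to 1 *)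

Definition M0 : rmat := (1, 0, 1, 1).

Definition c0 : R -> pt := curve M0.

Lemma M0_det : rdet M0 = 1.
Proof. unfold rdet, M0; ring. Qed.

Lemma det1_offdiag_products_nonneg al be ga de : (al * de - be * ga = 1)%Z ->
  (0 <= (be * de) * (al * ga))%Z.
Proof.
  intros H. replace ((be * de) * (al * ga))%Z with ((1 + be * ga) * (be * ga))%Z by (rewrite <- H; ring).
  nia.
Qed.

(* The image is on the axis iff be de + al ga y^2 = 0, whereas
   (be de) (al ga) = (1 + be ga) be ga >= 0; hence ga = be = 0. *)
Lemma parity_mob_vertical al be ga de y y' : (al * de - be * ga = 1)%Z ->
  Z.Odd al -> Z.Odd de -> 0 < y ->
  mob (IZR al, IZR be, IZR ga, IZR de) (0, y) = (0, y') -> y' = y.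
Proof.
  intros Hdet [u Hu] [v Hv] Hy H. unfold mob in H; cbn [fst snd] in H.
  injection H as Hre Him.
  assert (Hde : IZR de <> 0) by (apply not_0_IZR; lia).
  assert (0 < (IZR ga * 0 + IZR de) ^ 2 + (IZR ga * y) ^ 2) by (apply mob_den_pos; auto).
  assert (Req : IZR be * IZR de + IZR al * IZR ga * (y * y) = 0).
  { unfold Rdiv in Hre. apply Rmult_integral in Hre. destruct Hre as [Hre|Hre].
    - rewrite <- Hre. ring.
    - exfalso. revert Hre. apply Rinv_neq_0_compat. lra. }
  assert (Hga : ga = 0%Z).
  { apply eq_IZR. pose proof (IZR_le _ _ (det1_offdiag_products_nonneg _ _ _ _ Hdet)) as Hprod.
    rewrite !mult_IZR in Hprod.
    replace (IZR be * IZR de) with (- (IZR al * IZR ga * (y * y))) in Hprod by lra.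
    assert (HX : IZR al * IZR ga = 0).
    { destruct (Req_dec (IZR al * IZR ga) 0) as [|HX]; auto. exfalso.
      pose proof (Rsqr_pos_lt _ HX). unfold Rsqr in *.
      assert (0 < (IZR al * IZR ga) * (IZR al * IZR ga) * (y * y)) by (apply Rmult_lt_0_compat; nra).
      lra. }
    apply Rmult_integral in HX. destruct HX as [HX|HX]; auto.
    apply eq_IZR in HX. lia. }
  subst ga. rewrite Rmult_0_r, Rmult_0_l, Rplus_0_r in Req.
  assert (Hbe : be = 0%Z) by (apply eq_IZR; apply Rmult_integral in Req; tauto).
  subst be. assert (Hd2 : IZR de * IZR de = 1).
  { rewrite <- mult_IZR. f_equal. rewrite Z.mul_0_l, Z.sub_0_r in Hdet.
    destruct (Z.mul_eq_1 _ _ Hdet) as [-> | ->]; lia. }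
  rewrite <- Him. match goal with |- y / ?D = y => replace D with 1 by nra end. field.
Qed.

Lemma c0_simple : simple_line c0.
Proof.
  intros s t [[[a b] c] d] Hg Heq.
  unfold c0 in Heq. rewrite act_curve in Heq by auto using M0_det.
  pose proof Hg as [Hdet [[u Hu] [[w Hw] [_ [z Hz]]]]].
  apply exp_inv, (parity_mob_vertical (a + b) b (c + d - a - b) (d - b)); try apply exp_pos.
  - nia.
  - exists (u + w)%Z. lia.
  - exists (z - w)%Z. lia.
  - assert (rdet (adj M0) = 1) by (rewrite rdet_adj; apply M0_det).
    replace (IZR (a + b), IZR b, IZR (c + d - a - b), IZR (d - b))
      with (rmul (adj M0) (rmul (toR (a, b, c, d)) M0))
      by (unfold adj, M0, rmul, toR, ma, mb, mc, md; repeat rewrite ?plus_IZR, ?minus_IZR;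
          mat_eq; ring).
    rewrite mob_comp, <- Heq; auto using exp_pos.
    + apply mob_cancel; auto using adj_l, M0_det. apply exp_pos.
    + rewrite rdet_mul, rdet_toR, M0_det; auto; ring.
    + apply exp_pos.
Qed.

Lemma is_lim_continuous_at (f : R -> R) x : ex_derive f x -> is_lim f x (f x).
Proof.
  intros H. apply is_lim_continuity, continuity_pt_filterlim.
  exact (@ex_derive_continuous R_AbsRing R_NormedModule f x H).
Qed.

Lemma is_lim_comp_exp (f : R -> R) : ex_derive f 0 -> is_lim (fun t => f (exp t)) m_infty (f 0).
Proof.
  intros Hf. apply (is_lim_comp f exp m_infty (f 0) 0);
    [apply is_lim_continuous_at; auto | apply is_lim_exp_m |].
  exists 0. intros y _ h. injection h as h. pose proof (exp_pos y). lra.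
Qed.

Lemma is_lim_comp_exp_opp (f : R -> R) : ex_derive f 0 ->
  is_lim (fun t => f (exp (- t))) p_infty (f 0).
Proof.
  intros Hf. apply (is_lim_comp f (fun t => exp (- t)) p_infty (f 0) 0);
    [apply is_lim_continuous_at; auto | |].
  - apply (is_lim_comp exp Ropp p_infty 0 m_infty); [apply is_lim_exp_m | |].
    + replace m_infty with (Rbar_opp p_infty) by reflexivity. apply is_lim_opp, is_lim_id.
    + exists 0. intros; discriminate.
  - exists 0. intros y _ h. injection h as h. pose proof (exp_pos (- y)). lra.
Qed.

Lemma c0_fst t : fst (c0 t) = exp t * exp t / (1 + exp t * exp t).
Proof. unfold c0, curve, M0, mob; cbn [fst snd]. pose proof (exp_pos t). field. nra. Qed.

Lemma c0_snd t : snd (c0 t) = exp t / (1 + exp t * exp t).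
Proof. unfold c0, curve, M0, mob; cbn [fst snd]. f_equal. ring. Qed.

Lemma c0_to_e2 : to_e2 c0 m_infty.
Proof.
  exists gid. split; [apply Gamma2_id |]. unfold tends_to_bd, gid, mb, md.
  replace (IZR 0 / IZR 1) with 0 by (simpl; field). split.
  - set (f := fun u => u * u / (1 + u * u)).
    apply is_lim_ext with (fun t => f (exp t)); [intros; rewrite c0_fst; reflexivity |].
    replace (Finite 0) with (Finite (f 0)) by (unfold f; f_equal; field).
    apply is_lim_comp_exp. unfold f. auto_derive. nra.
  - set (f := fun u => u / (1 + u * u)).
    apply is_lim_ext with (fun t => f (exp t)); [intros; rewrite c0_snd; reflexivity |].
    replace (Finite 0) with (Finite (f 0)) by (unfold f; f_equal; field).
    apply is_lim_comp_exp. unfold f. auto_derive. nra.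
Qed.

Lemma c0_to_e3 : to_e3 c0 p_infty.
Proof.
  exists gid. split; [apply Gamma2_id |]. unfold tends_to_bd, gid, ma, mb, mc, md.
  replace ((IZR 1 + IZR 0) / (IZR 0 + IZR 1)) with 1 by (simpl; field). split.
  - set (f := fun v => 1 / (v * v + 1)).
    apply is_lim_ext with (fun t => f (exp (- t))).
    { intros t. rewrite c0_fst. unfold f. rewrite exp_Ropp. pose proof (exp_pos t). field. split; nra. }
    replace (Finite 1) with (Finite (f 0)) by (unfold f; f_equal; field).
    apply is_lim_comp_exp_opp. unfold f. auto_derive. nra.
  - set (f := fun v => v / (v * v + 1)).
    apply is_lim_ext with (fun t => f (exp (- t))).
    { intros t. rewrite c0_snd. unfold f. rewrite exp_Ropp. pose proof (exp_pos t). field. split; nra. }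
    replace (Finite 0) with (Finite (f 0)) by (unfold f; f_equal; field).
    apply is_lim_comp_exp_opp. unfold f. auto_derive. nra.
Qed.

(* On bottom rows (c, d) of Gamma(2), [endpoint_form M0] is the odd integer (c + d) d. *)
Lemma c0_orbit_le h t : Gamma2 h -> snd (act h (c0 t)) <= / 2.
Proof.
  intros Hh. pose proof (Im_act_curve_le h M0 t Hh M0_det).
  pose proof (act_inH h _ Hh (curve_inH M0 t M0_det)) as Hy. unfold inH in Hy.
  assert (1 <= Rabs (endpoint_form M0 (mc h) (md h))); [| unfold c0 in *; nra].
  destruct h as [[[a b] c] d]. destruct Hh as [_ [_ [_ [[u Hu] [v Hv]]]]].
  unfold endpoint_form, M0, mc, md.
  replace ((IZR c * 1 + IZR d * 1) * (IZR c * 0 + IZR d * 1)) with (IZR ((c + d) * d))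
    by (rewrite mult_IZR, plus_IZR; ring).
  rewrite <- abs_IZR. apply IZR_le. subst. nia.
Qed.

Lemma c0_height : height_e1 c0 = 0.
Proof.
  destruct (height_e1_bounds c0 (/ 2) 0 gid) as [H1 H2];
    auto using Gamma2_id, c0_orbit_le; [intros; apply curve_inH, M0_det | lra |].
  rewrite act_gid, c0_snd, exp_0 in H1 by apply curve_inH, M0_det.
  replace (2 * (1 / (1 + 1 * 1))) with 1 in H1 by field.
  replace (2 * / 2) with 1 in H2 by field.
  rewrite ln_1 in H1, H2. lra.
Qed.

Theorem proposition4p1 :
  (forall c, closed_geodesic c -> height_e1 c <> h2_M_e1) /\
  (exists c, geodesic_line c /\ simple_line c /\
     to_e2 c m_infty /\ to_e3 c p_infty /\ height_e1 c = h2_M_e1).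
Proof.
  rewrite h2_M_e1_eq_0. split.
  - intros c Hc. pose proof (closed_geodesic_height_pos c Hc). lra.
  - exists c0. split; [apply curve_geodesic, M0_det |].
    split; [apply c0_simple |]. split; [apply c0_to_e2 |]. split; [apply c0_to_e3 |].
    apply c0_height.
Qed.
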